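(* Let $C_1,C_2,C_3,C_4$ be four distinct great circles on the unit sphere, no three of which have a common point, forming the partition $\mathcal P$, and let $F$ be a quadrilateral face of $\mathcal P$ whose consecutive sides lie on $C_1,C_2,C_3,C_4$, with interior angles $\pi a,\pi b,\pi c,\pi d$ at its vertices $C_1\cap C_2$, $C_2\cap C_3$, $C_3\cap C_4$, $C_4\cap C_1$ respectively. Consider continuous deformations of the configuration through configurations of four great circles keeping the angles $a,b,c,d$ of the face $F$ fixed. Let $T_2$ (resp. $T_4$, $T_1$, $T_3$) denote the triangular face of $\mathcal P$ adjacent to $F$ along its side on $C_2$ (resp. $C_4$, $C_1$, $C_3$); thus $T_2$ is bounded by $C_1,C_2,C_3$, $T_4$ by $C_3,C_4,C_1$, $T_1$ by $C_4,C_1,C_2$, and $T_3$ by $C_2,C_3,C_4$. If $a+b>c+d$ (resp. $a+b<c+d$), then the configuration can be so deformed until $T_2$ (resp. $T_4$) is contracted to a point, so that $C_1,C_2,C_3$ (resp. $C_3,C_4,C_1$) have a triple intersection, but it cannot be so deformed that $T_4$ (resp. $T_2$) is contracted to a point. Similarly, if $a+d>b+c$ (resp. $a+d<b+c$), then the configuration can be so deformed until $T_1$ (resp. $T_3$) is contracted to a point, so that $C_4,C_1,C_2$ (resp. $C_2,C_3,C_4$) have a triple intersection, but it cannot be so deformed that $T_3$ (resp. $T_1$) is contracted to a point.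
   Context: Four great circles in general position (distinct, no triple intersections) partition the unit sphere into 8 triangular and 6 quadrilateral faces; every edge separates a triangular face from a quadrilateral one. Angles are measured in units of $\pi$. *)

From Stdlib Require Import Reals.
Open Scope R_scope.

Record vec3 := V3 { vx : R; vy : R; vz : R }.

Definition dot (u v : vec3) : R := vx u * vx v + vy u * vy v + vz u * vz v.
Definition vsub (u v : vec3) : vec3 := V3 (vx u - vx v) (vy u - vy v) (vz u - vz v).
Definition vscale (r : R) (u : vec3) : vec3 := V3 (r * vx u) (r * vy u) (r * vz u).
Definition norm (u : vec3) : R := sqrt (dot u u).
Definition on_sphere (x : vec3) : Prop := dot x x = 1.

(** Spherical angle at the point [v] of the sphere between the great-circle
    arcs from [v] to [u] and from [v] to [w]: the angle between the tangent
    vectors at [v] pointing towards [u] and towards [w]. *)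
Definition tangent_towards (v u : vec3) : vec3 := vsub u (vscale (dot v u) v).
Definition sph_angle (v u w : vec3) : R :=
  let tu := tangent_towards v u in
  let tw := tangent_towards v w in
  acos (dot tu tw / (norm tu * norm tw)).

(** The normals are oriented so
    that the distinguished face F is the open region where all n_i . x > 0. *)
Inductive idx := I1 | I2 | I3 | I4.
Definition config := idx -> vec3.

Definition great_circle (c : config) (i : idx) (x : vec3) : Prop :=
  on_sphere x /\ dot (c i) x = 0.

Definition unit_normals (c : config) : Prop := forall i, dot (c i) (c i) = 1.

Definition general_position (c : config) : Prop :=
  (forall i j, i <> j -> exists x, ~ (great_circle c i x <-> great_circle c j x)) /\
  (forall i j k, i <> j -> j <> k -> i <> k ->
     ~ exists x, great_circle c i x /\ great_circle c j x /\ great_circle c k x).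

Definition triple_point (c : config) (i j k : idx) : Prop :=
  exists x, great_circle c i x /\ great_circle c j x /\ great_circle c k x.

Definition face_F (c : config) (x : vec3) : Prop :=
  on_sphere x /\ forall k, 0 < dot (c k) x.
Definition adj_face (c : config) (i : idx) (x : vec3) : Prop :=
  on_sphere x /\ dot (c i) x < 0 /\ forall k, k <> i -> 0 < dot (c k) x.

Definition is_vertex (c : config) (i j : idx) (v : vec3) : Prop :=
  great_circle c i v /\ great_circle c j v /\
  forall k, k <> i -> k <> j -> 0 < dot (c k) v.

Definition quad_face (c : config) (a b cc d : R) : Prop :=
  exists v1 v2 v3 v4,
    is_vertex c I1 I2 v1 /\ is_vertex c I2 I3 v2 /\
    is_vertex c I3 I4 v3 /\ is_vertex c I4 I1 v4 /\
    sph_angle v1 v4 v2 = PI * a /\ sph_angle v2 v1 v3 = PI * b /\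
    sph_angle v3 v2 v4 = PI * cc /\ sph_angle v4 v3 v1 = PI * d.

Definition good (c : config) (a b cc d : R) : Prop :=
  unit_normals c /\ general_position c /\ quad_face c a b cc d.

Definition path_cont_on (P : R -> Prop) (p : R -> config) : Prop :=
  forall i t, P t -> forall eps, 0 < eps -> exists delta, 0 < delta /\
    forall s, P s -> Rabs (s - t) < delta -> norm (vsub (p s i) (p t i)) < eps.

Definition closed01 (t : R) : Prop := 0 <= t <= 1.
Definition halfopen01 (t : R) : Prop := 0 <= t < 1.

Definition contracts_to_point (S : R -> vec3 -> Prop) : Prop :=
  forall eps, 0 < eps -> exists delta, 0 < delta /\
    forall t, 1 - delta < t < 1 -> forall x y, S t x -> S t y ->
      norm (vsub x y) < eps.

Definition can_contract (c0 : config) (a b cc d : R) (i j k : idx) : Prop :=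
  exists p : R -> config,
    p 0 = c0 /\ path_cont_on closed01 p /\
    (forall t, halfopen01 t -> good (p t) a b cc d) /\
    contracts_to_point (fun t => adj_face (p t) i) /\
    triple_point (p 1) j i k.

Definition can_contract_weak (c0 : config) (a b cc d : R) (i : idx) : Prop :=
  exists p : R -> config,
    p 0 = c0 /\ path_cont_on halfopen01 p /\
    (forall t, halfopen01 t -> good (p t) a b cc d) /\
    contracts_to_point (fun t => adj_face (p t) i).

From Stdlib Require Import Reals Lra Psatz FunctionalExtensionality.
Open Scope R_scope.

(* Each circle C_i is encoded by its unit normal n_i, oriented so that F is where all n_i . x > 0.
   The angle of F at C_i ∩ C_j is pi minus the angle between n_i and n_j, so the angles of F fix
   the four products n_i . n_(i+1), and once n1, n2 are fixed the configuration is determined by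
   the diagonal p = n1 . n3 and an orientation sign.  Admissibility then amounts to a few
   inequalities, quadratic or affine in p.

   If a + b > c + d, move p linearly down to cos (pi (a + b)), where det (n1, n2, n3) vanishes,
   i.e. C1, C2, C3 become concurrent.  The inequalities hold along the way because they hold at
   both ends, at the lower one thanks to the angle-sum bounds a + b + c + d > 2 and
   a + b + c - d < 2, a + b + d - c < 2 given by the spherical triangle inequality for the
   normals; and as det (n1, n2, n3) -> 0 the triangle across C2 is squeezed onto the common
   point of C1, C2, C3.  Conversely det (n1, n2, n3) <> 0 forces p > cos (pi (a + b)) in every
   admissible configuration, which keeps the vertices C3 ∩ C4 and C4 ∩ C1 of F at distance at
   least sqrt (2 (cos (pi (a + b)) - cos (pi (c + d)))); the triangle across C4 has points next
   to both, so it never shrinks.  The other three cases follow by relabelling cyclically. *)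

Definition cross (u v : vec3) : vec3 :=
  V3 (vy u * vz v - vz u * vy v) (vz u * vx v - vx u * vz v) (vx u * vy v - vy u * vx v).
Definition det3 (u v w : vec3) : R := dot u (cross v w).
Definition vadd (u v : vec3) : vec3 := V3 (vx u + vx v) (vy u + vy v) (vz u + vz v).

Definition lincomb (e1 e2 e3 : vec3) (x y z : R) : vec3 :=
  V3 (x * vx e1 + y * vx e2 + z * vx e3) (x * vy e1 + y * vy e2 + z * vy e3)
     (x * vz e1 + y * vz e2 + z * vz e3).

Ltac vec_coords := unfold det3, cross, dot, vadd, vsub, vscale, lincomb in *; simpl in *.

Lemma vec3_ext (u v : vec3) : vx u = vx v -> vy u = vy v -> vz u = vz v -> u = v.
Proof. destruct u, v; simpl; intros; subst; reflexivity. Qed.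

Ltac vec_ring := vec_coords; apply vec3_ext; simpl; ring.

Lemma dot_sym u v : dot u v = dot v u.
Proof. vec_coords; ring. Qed.

Lemma dot_self_ge0 u : 0 <= dot u u.
Proof. vec_coords; nra. Qed.

Lemma dot_self_eq0 u : dot u u = 0 -> u = V3 0 0 0.
Proof. vec_coords; intros H. apply vec3_ext; simpl; nra. Qed.

Lemma dot_scale_r w k u : dot w (vscale k u) = k * dot w u.
Proof. vec_coords; ring. Qed.

Lemma cross_dot_self u v : dot (cross u v) (cross u v) = dot u u * dot v v - (dot u v)^2.
Proof. vec_coords; ring. Qed.

Lemma dot_cross u v w : dot (cross u v) w = det3 u v w.
Proof. vec_coords; ring. Qed.

Lemma det3_cycle u v w : det3 u v w = det3 v w u.
Proof. vec_coords; ring. Qed.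

Lemma det3_swap12 u v w : det3 u v w = - det3 v u w.
Proof. vec_coords; ring. Qed.

Lemma det3_swap23 u v w : det3 u v w = - det3 u w v.
Proof. vec_coords; ring. Qed.

Lemma det3_sqr_gram u v w : (det3 u v w)^2 =
  dot u u * dot v v * dot w w + 2 * dot u v * dot v w * dot u w
  - dot u u * (dot v w)^2 - dot v v * (dot u w)^2 - dot w w * (dot u v)^2.
Proof. vec_coords; ring. Qed.

Lemma cross_decomposition u v w :
  vscale (dot (cross u v) (cross u v)) w =
  vadd (vscale (dot w (cross u v)) (cross u v))
   (vadd (vscale (dot w u * dot v v - dot w v * dot u v) u)
         (vscale (dot w v * dot u u - dot w u * dot u v) v)).
Proof. vec_ring. Qed.

Lemma perp_parallel_cross u v w : dot w u = 0 -> dot w v = 0 ->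
  vscale (dot (cross u v) (cross u v)) w = vscale (dot w (cross u v)) (cross u v).
Proof. intros Hu Hv. rewrite cross_decomposition, Hu, Hv. vec_ring. Qed.

Lemma det3_linear_dependence n1 n2 n3 n4 w :
  det3 n2 n3 n4 * dot n1 w - det3 n1 n3 n4 * dot n2 w + det3 n1 n2 n4 * dot n3 w
  - det3 n1 n2 n3 * dot n4 w = 0.
Proof. vec_coords; ring. Qed.

Lemma det3_linear_dependence_vec n1 n2 n3 n4 :
  vscale (det3 n1 n2 n4) n3 =
  vadd (vscale (det3 n2 n3 n4) (vscale (-1) n1))
    (vadd (vscale (det3 n1 n3 n4) n2) (vscale (det3 n1 n2 n3) n4)).
Proof. vec_ring. Qed.

Lemma det3_eq0_of_common_perp x u v w : dot x u = 0 -> dot x v = 0 -> dot x w = 0 ->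
  dot x x = 1 -> det3 u v w = 0.
Proof.
  intros Hu Hv Hw Hx.
  assert (E : det3 u v w * dot x x =
    dot x u * det3 x v w + dot x v * det3 u x w + dot x w * det3 u v x) by (vec_coords; ring).
  rewrite Hu, Hv, Hw, Hx in E. lra.
Qed.

Lemma dot_lincomb e1 e2 e3 x y z x' y' z' :
  dot e1 e1 = 1 -> dot e2 e2 = 1 -> dot e3 e3 = 1 ->
  dot e1 e2 = 0 -> dot e1 e3 = 0 -> dot e2 e3 = 0 ->
  dot (lincomb e1 e2 e3 x y z) (lincomb e1 e2 e3 x' y' z') = x*x' + y*y' + z*z'.
Proof.
  intros H1 H2 H3 H12 H13 H23.
  transitivity (x*x'*dot e1 e1 + y*y'*dot e2 e2 + z*z'*dot e3 e3 +
    (x*y'+y*x')*dot e1 e2 + (x*z'+z*x')*dot e1 e3 + (y*z'+z*y')*dot e2 e3).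
  - vec_coords; ring.
  - rewrite H1, H2, H3, H12, H13, H23; ring.
Qed.

Lemma det3_lincomb e1 e2 e3 x y z x' y' z' x'' y'' z'' :
  det3 (lincomb e1 e2 e3 x y z) (lincomb e1 e2 e3 x' y' z') (lincomb e1 e2 e3 x'' y'' z'') =
  det3 (V3 x y z) (V3 x' y' z') (V3 x'' y'' z'') * det3 e1 e2 e3.
Proof. vec_coords; ring. Qed.

Lemma orthonormal_expansion e1 e2 v : dot e1 e1 = 1 -> dot e2 e2 = 1 -> dot e1 e2 = 0 ->
  v = lincomb e1 e2 (cross e1 e2) (dot v e1) (dot v e2) (dot v (cross e1 e2)).
Proof.
  intros H1 H2 H12.
  pose proof (cross_decomposition e1 e2 v) as E.
  rewrite cross_dot_self, H1, H2, H12 in E.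
  replace (1 * 1 - 0 ^ 2) with 1 in E by ring.
  apply (f_equal (fun t => (vx t, vy t, vz t))) in E.
  vec_coords. inversion E. apply vec3_ext; simpl; lra.
Qed.

Lemma norm_scale k m : 0 < k -> norm (vscale k m) = k * norm m.
Proof.
  intros Hk. unfold norm.
  replace (dot (vscale k m) (vscale k m)) with (k*k * dot m m) by (vec_coords; ring).
  rewrite sqrt_mult_alt by nra. rewrite sqrt_square by lra. reflexivity.
Qed.

Lemma norm_sqr u : norm u * norm u = dot u u.
Proof. apply sqrt_sqrt, dot_self_ge0. Qed.

Lemma dot_le_norm_mul u w : dot u w <= norm u * norm w.
Proof.
  unfold norm. rewrite <- sqrt_mult by apply dot_self_ge0.
  pose proof (dot_self_ge0 (cross u w)) as H. rewrite cross_dot_self in H.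
  destruct (Rle_or_lt (dot u w) 0).
  - pose proof (sqrt_pos (dot u u * dot w w)). lra.
  - rewrite <- (sqrt_pow2 (dot u w)) by lra. apply sqrt_le_1_alt. lra.
Qed.

Lemma norm_vadd_le u w : norm (vadd u w) <= norm u + norm w.
Proof.
  assert (E : dot (vadd u w) (vadd u w) = dot u u + 2 * dot u w + dot w w) by (vec_coords; ring).
  pose proof (dot_le_norm_mul u w). pose proof (norm_sqr u). pose proof (norm_sqr w).
  assert (0 <= norm u) by apply sqrt_pos. assert (0 <= norm w) by apply sqrt_pos.
  unfold norm at 1. rewrite E, <- (sqrt_pow2 (norm u + norm w)) by lra.
  apply sqrt_le_1_alt. nra.
Qed.

Lemma norm_vsub_sym u w : norm (vsub u w) = norm (vsub w u).
Proof. unfold norm. f_equal. vec_coords. ring. Qed.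

Lemma norm_vsub_chain x y u v :
  norm (vsub u v) <= norm (vsub x u) + norm (vsub x y) + norm (vsub y v).
Proof.
  replace (vsub u v) with (vadd (vsub u x) (vadd (vsub x y) (vsub y v))) by vec_ring.
  rewrite (norm_vsub_sym x u).
  pose proof (norm_vadd_le (vsub u x) (vadd (vsub x y) (vsub y v))).
  pose proof (norm_vadd_le (vsub x y) (vsub y v)). lra.
Qed.

Lemma dot_norm_ratio_scale k1 k2 m1 m2 : 0 < k1 -> 0 < k2 -> 0 < norm m1 -> 0 < norm m2 ->
  dot (vscale k1 m1) (vscale k2 m2) / (norm (vscale k1 m1) * norm (vscale k2 m2)) =
  dot m1 m2 / (norm m1 * norm m2).
Proof.
  intros. rewrite !norm_scale by lra.
  replace (dot (vscale k1 m1) (vscale k2 m2)) with (k1*k2*dot m1 m2) by (vec_coords; ring).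
  field. repeat split; lra.
Qed.

Lemma unit_dot_sqr_le1 u w : dot u u = 1 -> dot w w = 1 -> (dot u w)^2 <= 1.
Proof.
  intros Hu Hw. pose proof (dot_self_ge0 (cross u w)) as H.
  rewrite cross_dot_self, Hu, Hw in H. lra.
Qed.

Lemma unit_dot_bound u w : dot u u = 1 -> dot w w = 1 -> -1 <= dot u w <= 1.
Proof. intros Hu Hw. pose proof (unit_dot_sqr_le1 u w Hu Hw). nra. Qed.

Lemma cross_unit_dot_self u w : dot u u = 1 -> dot w w = 1 ->
  dot (cross u w) (cross u w) = 1 - (dot u w)^2.
Proof. intros Hu Hw. rewrite cross_dot_self, Hu, Hw. ring. Qed.

Lemma unit_dot_sqr1_parallel u w : dot u u = 1 -> dot w w = 1 -> (dot u w)^2 = 1 ->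
  forall x, dot w x = dot u w * dot u x.
Proof.
  intros Hu Hw Hk x.
  set (k := dot u w) in *.
  assert (E : dot (vsub w (vscale k u)) (vsub w (vscale k u)) = 0).
  { replace (dot (vsub w (vscale k u)) (vsub w (vscale k u))) with
      (dot w w - 2 * k * dot u w + k*k*dot u u) by (vec_coords; ring).
    fold k. rewrite Hu, Hw. nra. }
  apply dot_self_eq0 in E.
  assert (vx w = k * vx u /\ vy w = k * vy u /\ vz w = k * vz u) as [E1 [E2 E3]].
  { apply (f_equal (fun t => (vx t, vy t, vz t))) in E. unfold vsub, vscale in E; simpl in E.
    inversion E. repeat split; lra. }
  unfold dot. rewrite E1, E2, E3. ring.
Qed.

Lemma unit_dot_sqr_lt1_of_det3 u w z : dot u u = 1 -> dot w w = 1 -> det3 u w z <> 0 ->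
  (dot u w)^2 < 1.
Proof.
  intros Hu Hw Hd. destruct (Rle_lt_or_eq_dec _ _ (unit_dot_sqr_le1 u w Hu Hw)) as [Hl|He]; auto.
  exfalso. apply Hd. rewrite <- dot_cross.
  assert (H0 : dot (cross u w) (cross u w) = 0) by (rewrite cross_unit_dot_self; auto; lra).
  apply dot_self_eq0 in H0. rewrite H0. vec_coords; ring.
Qed.

Lemma normalize_unit u : 0 < dot u u ->
  dot (vscale (/ norm u) u) (vscale (/ norm u) u) = 1 /\
  forall w, dot w (vscale (/ norm u) u) = dot w u / norm u.
Proof.
  intros Hu. assert (Hn : 0 < norm u) by (apply sqrt_lt_R0; auto).
  pose proof (norm_sqr u) as Hsq. split.
  - replace (dot (vscale (/ norm u) u) (vscale (/ norm u) u)) with (dot u u / (norm u * norm u))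
      by (vec_coords; field; lra). rewrite Hsq. field. lra.
  - intro w. vec_coords. field. lra.
Qed.

Lemma exists_on_circle_off_circle u w : dot u u = 1 -> dot w w = 1 -> (dot u w)^2 < 1 ->
  exists x, on_sphere x /\ dot u x = 0 /\ dot w x <> 0.
Proof.
  intros Hu Hw Hk. set (k := dot u w) in *.
  set (m := vsub w (vscale k u)).
  assert (Mm : dot m m = 1 - k^2).
  { unfold m. replace (dot (vsub w (vscale k u)) (vsub w (vscale k u))) with
      (dot w w - 2 * k * dot u w + k*k*dot u u) by (vec_coords; ring).
    fold k. rewrite Hu, Hw; ring. }
  assert (Mu : dot u m = 0).
  { unfold m. replace (dot u (vsub w (vscale k u))) with (dot u w - k * dot u u)
      by (vec_coords; ring).
    fold k; rewrite Hu; ring. }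
  assert (Mw : dot w m = 1 - k^2).
  { unfold m. replace (dot w (vsub w (vscale k u))) with (dot w w - k * dot u w)
      by (vec_coords; ring).
    fold k; rewrite Hw; ring. }
  assert (Hm : 0 < dot m m) by lra.
  destruct (normalize_unit m Hm) as [Hunit Hdot].
  assert (0 < norm m) by (apply sqrt_lt_R0; auto).
  exists (vscale (/ norm m) m). unfold on_sphere. rewrite (Hdot u), (Hdot w), Mu, Mw.
  split; [exact Hunit|split].
  - unfold Rdiv. ring.
  - apply Rgt_not_eq, Rdiv_lt_0_compat; lra.
Qed.

Lemma perp_both_eq_scale_cross u v w : dot (cross u v) (cross u v) = 1 ->
  dot w u = 0 -> dot w v = 0 -> w = vscale (dot w (cross u v)) (cross u v).
Proof.
  intros HX Hu Hv. pose proof (perp_parallel_cross u v w Hu Hv) as E.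
  rewrite HX in E. rewrite <- E. vec_ring.
Qed.

Lemma tangent_towards_parallel ni nj v u :
  dot ni ni = 1 -> dot nj nj = 1 -> (dot ni nj)^2 < 1 ->
  dot v v = 1 -> dot v ni = 0 -> dot v nj = 0 -> dot u ni = 0 -> 0 < dot nj u ->
  exists kap, 0 < kap /\ tangent_towards v u = vscale kap (vsub nj (vscale (dot ni nj) ni)).
Proof.
  intros Hi Hj Hij Hv Hvi Hvj Hui Hju.
  set (t := tangent_towards v u). set (m := vsub nj (vscale (dot ni nj) ni)).
  set (X := cross ni v).
  assert (HX : dot X X = 1) by (unfold X; rewrite cross_unit_dot_self, (dot_sym ni v), Hvi; lra).
  assert (Et : t = vscale (dot t X) X).
  { apply perp_both_eq_scale_cross; auto; unfold t, tangent_towards.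
    - replace (dot (vsub u (vscale (dot v u) v)) ni) with (dot u ni - dot v u * dot v ni)
        by (vec_coords; ring). rewrite Hui, Hvi; ring.
    - replace (dot (vsub u (vscale (dot v u) v)) v) with (dot u v - dot v u * dot v v)
        by (vec_coords; ring). rewrite Hv, (dot_sym u v); ring. }
  assert (Em : m = vscale (dot m X) X).
  { apply perp_both_eq_scale_cross; auto; unfold m.
    - replace (dot (vsub nj (vscale (dot ni nj) ni)) ni) with (dot nj ni - dot ni nj * dot ni ni)
        by (vec_coords; ring). rewrite Hi, (dot_sym nj ni); ring.
    - replace (dot (vsub nj (vscale (dot ni nj) ni)) v) with (dot nj v - dot ni nj * dot ni v)
        by (vec_coords; ring). rewrite (dot_sym nj v), (dot_sym ni v), Hvi, Hvj; ring. }
  set (a := dot t X) in *. set (b := dot m X) in *.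
  assert (Htj : dot t nj = dot nj u).
  { unfold t, tangent_towards. replace (dot (vsub u (vscale (dot v u) v)) nj)
      with (dot u nj - dot v u * dot v nj) by (vec_coords; ring).
    rewrite Hvj, (dot_sym u nj); ring. }
  assert (Hmj : dot m nj = 1 - (dot ni nj)^2).
  { unfold m. replace (dot (vsub nj (vscale (dot ni nj) ni)) nj) with
      (dot nj nj - dot ni nj * dot ni nj) by (vec_coords; ring). rewrite Hj; ring. }
  assert (Hab : 0 < a * b).
  { assert (Ht' : dot t nj = a * dot X nj) by (rewrite Et; vec_coords; ring).
    assert (Hm' : dot m nj = b * dot X nj) by (rewrite Em; vec_coords; ring).
    assert (0 < dot t nj * dot m nj) by (rewrite Htj, Hmj; nra).
    rewrite Ht', Hm' in H. nra. }
  assert (Hb : b <> 0) by (intro E; rewrite E in Hab; lra).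
  exists (a / b). split.
  - replace (a / b) with (a * b / (b * b)) by (field; auto). apply Rdiv_lt_0_compat; nra.
  - rewrite Et, Em. vec_coords; apply vec3_ext; simpl; field; auto.
Qed.

Lemma sph_angle_at_vertex ni nj v u w :
  dot ni ni = 1 -> dot nj nj = 1 -> (dot ni nj)^2 < 1 ->
  dot v v = 1 -> dot v ni = 0 -> dot v nj = 0 ->
  dot u ni = 0 -> 0 < dot nj u -> dot w nj = 0 -> 0 < dot ni w ->
  sph_angle v u w = acos (- dot ni nj).
Proof.
  intros Hi Hj Hij Hv Hvi Hvj Hui Hju Hwj Hiw.
  destruct (tangent_towards_parallel ni nj v u) as [k1 [Hk1 E1]]; auto.
  destruct (tangent_towards_parallel nj ni v w) as [k2 [Hk2 E2]]; auto.
  { rewrite dot_sym; auto. }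
  unfold sph_angle. simpl. rewrite E1, E2, (dot_sym nj ni).
  set (k := dot ni nj) in *.
  assert (N1 : dot (vsub nj (vscale k ni)) (vsub nj (vscale k ni)) = 1 - k^2).
  { replace (dot (vsub nj (vscale k ni)) (vsub nj (vscale k ni))) with
     (dot nj nj - 2 * k * dot ni nj + k*k*dot ni ni) by (vec_coords; ring).
    fold k. rewrite Hi, Hj. ring. }
  assert (N2 : dot (vsub ni (vscale k nj)) (vsub ni (vscale k nj)) = 1 - k^2).
  { replace (dot (vsub ni (vscale k nj)) (vsub ni (vscale k nj))) with
     (dot ni ni - 2 * k * dot ni nj + k*k*dot nj nj) by (vec_coords; ring).
    fold k. rewrite Hi, Hj. ring. }
  assert (N12 : dot (vsub nj (vscale k ni)) (vsub ni (vscale k nj)) = - k * (1 - k^2)).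
  { replace (dot (vsub nj (vscale k ni)) (vsub ni (vscale k nj))) with
     (dot ni nj - k * dot nj nj - k * dot ni ni + k*k*dot ni nj) by (vec_coords; ring).
    fold k. rewrite Hi, Hj. ring. }
  rewrite dot_norm_ratio_scale
    by (auto; unfold norm; try rewrite N1; try rewrite N2; apply sqrt_lt_R0; lra).
  unfold norm. rewrite N1, N2, N12, sqrt_sqrt by lra. f_equal. field. lra.
Qed.

Lemma same_sign_trans x y z : 0 < x * y -> 0 < y * z -> 0 < x * z.
Proof. intros. nra. Qed.

Lemma neg_of_nonpos_prod_pos x y : x <= 0 -> 0 < x * y -> x < 0 /\ y < 0.
Proof.
  intros Hx Hxy. destruct (Rle_lt_or_eq_dec _ _ Hx) as [Hlt|Heq].
  - split; nra.
  - subst x. lra.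
Qed.

(* The sign conditions say that all four triple determinants have the same sign, i.e.
   each vertex C_i ∩ C_j of F lies strictly on the positive side of the two other circles. *)
Record admissible (n1 n2 n3 n4 : vec3) (a b c d : R) : Prop := {
  adm_unit1 : dot n1 n1 = 1; adm_unit2 : dot n2 n2 = 1;
  adm_unit3 : dot n3 n3 = 1; adm_unit4 : dot n4 n4 = 1;
  adm_a : 0 < a < 1; adm_b : 0 < b < 1; adm_c : 0 < c < 1; adm_d : 0 < d < 1;
  adm_dot12 : dot n1 n2 = - cos (PI * a); adm_dot23 : dot n2 n3 = - cos (PI * b);
  adm_dot34 : dot n3 n4 = - cos (PI * c); adm_dot41 : dot n4 n1 = - cos (PI * d);
  adm_sign124 : 0 < det3 n1 n2 n3 * det3 n1 n2 n4;
  adm_sign134 : 0 < det3 n1 n2 n3 * det3 n1 n3 n4;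
  adm_sign234 : 0 < det3 n1 n2 n3 * det3 n2 n3 n4 }.

Lemma vertex_det3_sign ni nj nk nl v : dot v v = 1 -> dot v ni = 0 -> dot v nj = 0 ->
  0 < dot nk v -> 0 < dot nl v -> 0 < dot (cross ni nj) (cross ni nj) ->
  0 < det3 ni nj nk * det3 ni nj nl.
Proof.
  intros Hv Hi Hj Hk Hl HX.
  pose proof (perp_parallel_cross ni nj v Hi Hj) as P.
  set (X := cross ni nj) in *.
  assert (Ek : dot X X * dot nk v = dot v X * det3 ni nj nk).
  { rewrite <- dot_cross, <- dot_scale_r, P. fold X. vec_coords; ring. }
  assert (El : dot X X * dot nl v = dot v X * det3 ni nj nl).
  { rewrite <- dot_cross, <- dot_scale_r, P. fold X. vec_coords; ring. }
  assert (H : 0 < (dot X X * dot nk v) * (dot X X * dot nl v)).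
  { apply Rmult_lt_0_compat; apply Rmult_lt_0_compat; auto. }
  rewrite Ek, El in H. nra.
Qed.

Lemma vertex_of_sign ni nj nk nl : dot ni ni = 1 -> dot nj nj = 1 -> (dot ni nj)^2 < 1 ->
  0 < det3 ni nj nk * det3 ni nj nl ->
  exists v, dot v v = 1 /\ dot v ni = 0 /\ dot v nj = 0 /\ 0 < dot nk v /\ 0 < dot nl v.
Proof.
  intros Hi Hj Hij Hd.
  assert (HX : 0 < dot (cross ni nj) (cross ni nj)) by (rewrite cross_unit_dot_self; auto; lra).
  assert (Hs : exists s, (s = 1 \/ s = -1) /\ 0 < s * det3 ni nj nk /\ 0 < s * det3 ni nj nl).
  { destruct (Rlt_or_le 0 (det3 ni nj nk)).
    - exists 1. split; [left; reflexivity | split; nra].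
    - destruct (neg_of_nonpos_prod_pos _ _ H Hd).
      exists (-1). split; [right; reflexivity | split; lra]. }
  destruct Hs as [s [Hs [Hk Hl]]].
  set (X := vscale s (cross ni nj)).
  assert (HXX : dot X X = dot (cross ni nj) (cross ni nj)).
  { unfold X. rewrite dot_scale_r, dot_sym, dot_scale_r. destruct Hs as [-> | ->]; ring. }
  rewrite <- HXX in HX.
  destruct (normalize_unit X HX) as [Hu Hdot].
  assert (0 < norm X) by (apply sqrt_lt_R0; auto).
  assert (Hdot' : forall w, dot (vscale (/ norm X) X) w = s * det3 ni nj w / norm X).
  { intro w. rewrite dot_sym, Hdot. unfold X. rewrite dot_scale_r, dot_sym, dot_cross.
    reflexivity. }
  exists (vscale (/ norm X) X). split; [exact Hu|].
  rewrite !Hdot', (dot_sym nk), (dot_sym nl), !Hdot'.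
  replace (det3 ni nj ni) with 0 by (vec_coords; ring).
  replace (det3 ni nj nj) with 0 by (vec_coords; ring).
  repeat split; try (unfold Rdiv; ring); apply Rdiv_lt_0_compat; lra.
Qed.

Lemma good_dot_sqr_lt1 c a b cc d i j : good c a b cc d -> i <> j -> (dot (c i) (c j))^2 < 1.
Proof.
  intros [Hu [[Hdistinct _] _]] Hij.
  destruct (Hdistinct i j Hij) as [x Hx].
  destruct (Rle_lt_or_eq_dec _ _ (unit_dot_sqr_le1 (c i) (c j) (Hu i) (Hu j))) as [Hl|He]; auto.
  exfalso. apply Hx. unfold great_circle.
  pose proof (unit_dot_sqr1_parallel _ _ (Hu i) (Hu j) He x) as E.
  assert (dot (c i) (c j) <> 0) by (intro Z; rewrite Z in He; lra).
  rewrite E. split; intros [Hs Hc]; split; auto.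
  - rewrite Hc; ring.
  - apply Rmult_integral in Hc. tauto.
Qed.

Lemma vertex_dots c i j k l v : is_vertex c i j v -> k <> i -> k <> j -> l <> i -> l <> j ->
  dot v v = 1 /\ dot v (c i) = 0 /\ dot v (c j) = 0 /\ 0 < dot (c k) v /\ 0 < dot (c l) v.
Proof.
  intros [[Hs Hi] [[_ Hj] Hpos]] Hki Hkj Hli Hlj.
  rewrite (dot_sym v (c i)), (dot_sym v (c j)). repeat split; auto.
Qed.

Lemma vertex_angle_inv ni nj v u w a :
  dot ni ni = 1 -> dot nj nj = 1 -> (dot ni nj)^2 < 1 ->
  dot v v = 1 -> dot v ni = 0 -> dot v nj = 0 ->
  dot u ni = 0 -> 0 < dot nj u -> dot w nj = 0 -> 0 < dot ni w ->
  sph_angle v u w = PI * a -> 0 < a < 1 /\ dot ni nj = - cos (PI * a).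
Proof.
  intros Hi Hj Hij Hv Hvi Hvj Hui Hju Hwj Hiw Ha.
  rewrite (sph_angle_at_vertex ni nj v u w) in Ha by auto.
  assert (Hb : -1 < - dot ni nj < 1) by nra.
  pose proof (acos_bound_lt _ Hb). pose proof PI_RGT_0.
  rewrite Ha in H. split.
  - split; apply (Rmult_lt_reg_l PI); lra.
  - rewrite <- Ha, cos_acos by lra. ring.
Qed.

Lemma good_admissible c a b cc d : good c a b cc d ->
  admissible (c I1) (c I2) (c I3) (c I4) a b cc d.
Proof.
  intros Hg.
  assert (D12 := good_dot_sqr_lt1 c a b cc d I1 I2 Hg ltac:(discriminate)).
  assert (D23 := good_dot_sqr_lt1 c a b cc d I2 I3 Hg ltac:(discriminate)).
  assert (D34 := good_dot_sqr_lt1 c a b cc d I3 I4 Hg ltac:(discriminate)).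
  assert (D41 := good_dot_sqr_lt1 c a b cc d I4 I1 Hg ltac:(discriminate)).
  destruct Hg as [Hu [_ [v1 [v2 [v3 [v4 [V1 [V2 [V3 [V4 [A1 [A2 [A3 A4]]]]]]]]]]]]].
  destruct (vertex_dots c I1 I2 I3 I4 v1 V1) as [S1 [P11 [P12 [Q13 Q14]]]]; try discriminate.
  destruct (vertex_dots c I2 I3 I1 I4 v2 V2) as [S2 [P22 [P23 [Q21 Q24]]]]; try discriminate.
  destruct (vertex_dots c I3 I4 I1 I2 v3 V3) as [S3 [P33 [P34 [Q31 Q32]]]]; try discriminate.
  destruct (vertex_dots c I4 I1 I2 I3 v4 V4) as [S4 [P44 [P41 [Q42 Q43]]]]; try discriminate.
  pose proof (Hu I1) as U1. pose proof (Hu I2) as U2.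
  pose proof (Hu I3) as U3. pose proof (Hu I4) as U4.
  set (n1 := c I1) in *. set (n2 := c I2) in *. set (n3 := c I3) in *. set (n4 := c I4) in *.
  destruct (vertex_angle_inv n1 n2 v1 v4 v2 a) as [Ha Ea]; auto.
  destruct (vertex_angle_inv n2 n3 v2 v1 v3 b) as [Hb Eb]; auto.
  destruct (vertex_angle_inv n3 n4 v3 v2 v4 cc) as [Hc Ec]; auto.
  destruct (vertex_angle_inv n4 n1 v4 v3 v1 d) as [Hd Ed]; auto.
  assert (Z1 : 0 < det3 n1 n2 n3 * det3 n1 n2 n4)
    by (apply (vertex_det3_sign _ _ _ _ v1); auto; rewrite cross_unit_dot_self; auto; lra).
  assert (Z2 : 0 < det3 n2 n3 n1 * det3 n2 n3 n4)
    by (apply (vertex_det3_sign _ _ _ _ v2); auto; rewrite cross_unit_dot_self; auto; lra).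
  assert (Z3 : 0 < det3 n3 n4 n1 * det3 n3 n4 n2)
    by (apply (vertex_det3_sign _ _ _ _ v3); auto; rewrite cross_unit_dot_self; auto; lra).
  rewrite <- (det3_cycle n1 n2 n3) in Z2.
  rewrite <- (det3_cycle n1 n3 n4), <- (det3_cycle n2 n3 n4) in Z3.
  constructor; auto.
  apply (same_sign_trans _ (det3 n2 n3 n4)); auto. rewrite Rmult_comm. auto.
Qed.

Lemma det3_neq0_permute u v w : det3 u v w <> 0 ->
  det3 v u w <> 0 /\ det3 u w v <> 0 /\ det3 v w u <> 0 /\ det3 w u v <> 0 /\ det3 w v u <> 0.
Proof.
  intros H. repeat split; intro E; apply H.
  - rewrite det3_swap12, E; ring.
  - rewrite det3_swap23, E; ring.
  - rewrite det3_cycle, E; ring.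
  - rewrite det3_cycle, det3_cycle, E; ring.
  - rewrite det3_cycle, det3_swap12, E; ring.
Qed.

Section AdmissibleConfig.
Variables (c : config) (a b cc d : R).
Hypothesis Hadm : admissible (c I1) (c I2) (c I3) (c I4) a b cc d.

Lemma admissible_det3_neq0 i j k : i <> j -> j <> k -> i <> k -> det3 (c i) (c j) (c k) <> 0.
Proof.
  destruct Hadm as [_ _ _ _ _ _ _ _ _ _ _ _ Z1 Z2 Z3].
  assert (N123 : det3 (c I1) (c I2) (c I3) <> 0) by (intro E; rewrite E in Z1; lra).
  assert (N124 : det3 (c I1) (c I2) (c I4) <> 0) by (intro E; rewrite E in Z1; lra).
  assert (N134 : det3 (c I1) (c I3) (c I4) <> 0) by (intro E; rewrite E in Z2; lra).
  assert (N234 : det3 (c I2) (c I3) (c I4) <> 0) by (intro E; rewrite E in Z3; lra).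
  pose proof (det3_neq0_permute _ _ _ N123). pose proof (det3_neq0_permute _ _ _ N124).
  pose proof (det3_neq0_permute _ _ _ N134). pose proof (det3_neq0_permute _ _ _ N234).
  destruct i, j, k; intros; try congruence; tauto.
Qed.

Lemma admissible_unit_normals : unit_normals c.
Proof. destruct Hadm. intro i; destruct i; assumption. Qed.

Lemma admissible_dot_sqr_lt1 i j : i <> j -> (dot (c i) (c j))^2 < 1.
Proof.
  intros Hij.
  assert (exists k, j <> k /\ i <> k) as [k [Hjk Hik]].
  { destruct i, j; try congruence;
      first [exists I1; split; discriminate | exists I2; split; discriminate |
             exists I3; split; discriminate | exists I4; split; discriminate]. }
  apply (unit_dot_sqr_lt1_of_det3 _ _ (c k)); try apply admissible_unit_normals.
  apply admissible_det3_neq0; auto.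
Qed.

Lemma admissible_general_position : general_position c.
Proof.
  pose proof admissible_unit_normals as Hu. split.
  - intros i j Hij.
    destruct (exists_on_circle_off_circle (c i) (c j) (Hu i) (Hu j))
      as [x [Sx [Xi Xj]]]; [apply admissible_dot_sqr_lt1; auto|].
    exists x. intros [H _]. apply Xj. apply H. split; auto.
  - intros i j k Hij Hjk Hik [x [[Sx Xi] [[_ Xj] [_ Xk]]]].
    apply (admissible_det3_neq0 i j k Hij Hjk Hik).
    apply (det3_eq0_of_common_perp x); try (rewrite dot_sym; assumption). auto.
Qed.

Lemma admissible_vertex i j k l : i <> j -> i <> k -> i <> l -> j <> k -> j <> l -> k <> l ->
  0 < det3 (c i) (c j) (c k) * det3 (c i) (c j) (c l) -> exists v, is_vertex c i j v.
Proof.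
  intros Hij Hik Hil Hjk Hjl Hkl Hs. pose proof admissible_unit_normals as Hu.
  destruct (vertex_of_sign (c i) (c j) (c k) (c l) (Hu i) (Hu j)) as [v [Sv [Vi [Vj [Vk Vl]]]]];
    auto using admissible_dot_sqr_lt1.
  exists v. unfold is_vertex, great_circle, on_sphere.
  rewrite !(dot_sym (c _) v). repeat split; auto.
  intros m Hmi Hmj. destruct m, i, j, k, l; congruence || assumption.
Qed.

Lemma admissible_vertex_angle i j k l v u w x :
  i <> j -> i <> k -> i <> l -> j <> k -> j <> l ->
  is_vertex c i j v -> is_vertex c l i u -> is_vertex c j k w ->
  dot (c i) (c j) = - cos (PI * x) -> 0 < x < 1 -> sph_angle v u w = PI * x.
Proof.
  intros Hij Hik Hil Hjk Hjl Hv Hu Hw Hx Hx01.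
  destruct (vertex_dots c i j k k v Hv) as [Sv [Vi [Vj _]]]; auto.
  destruct (vertex_dots c l i j j u Hu) as [_ [_ [Ui [Uj _]]]]; auto.
  destruct (vertex_dots c j k i i w Hw) as [_ [Wj [_ [Wi _]]]]; auto.
  pose proof PI_RGT_0.
  rewrite (sph_angle_at_vertex (c i) (c j) v u w), Hx, Ropp_involutive, acos_cos; auto; try nra.
  - apply admissible_unit_normals.
  - apply admissible_unit_normals.
  - apply admissible_dot_sqr_lt1; auto.
Qed.

Lemma admissible_quad_face : quad_face c a b cc d.
Proof.
  destruct Hadm as [_ _ _ _ Ha Hb Hc Hd E12 E23 E34 E41 Z1 Z2 Z3].
  assert (W2 : 0 < det3 (c I2) (c I3) (c I1) * det3 (c I2) (c I3) (c I4))
    by (rewrite <- det3_cycle; auto).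
  assert (W3 : 0 < det3 (c I3) (c I4) (c I1) * det3 (c I3) (c I4) (c I2)).
  { rewrite <- (det3_cycle (c I1)), <- (det3_cycle (c I2)).
    apply (same_sign_trans _ (det3 (c I1) (c I2) (c I3))); [rewrite Rmult_comm|]; auto. }
  assert (W4 : 0 < det3 (c I4) (c I1) (c I2) * det3 (c I4) (c I1) (c I3)).
  { rewrite (det3_cycle (c I4) (c I1) (c I2)), (det3_cycle (c I4) (c I1) (c I3)).
    apply (same_sign_trans _ (det3 (c I1) (c I2) (c I3))); [rewrite Rmult_comm|]; auto. }
  destruct (admissible_vertex I1 I2 I3 I4) as [v1 V1]; try discriminate; auto.
  destruct (admissible_vertex I2 I3 I1 I4) as [v2 V2]; try discriminate; auto.
  destruct (admissible_vertex I3 I4 I1 I2) as [v3 V3]; try discriminate; auto.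
  destruct (admissible_vertex I4 I1 I2 I3) as [v4 V4]; try discriminate; auto.
  exists v1, v2, v3, v4. do 4 (split; [assumption|]).
  repeat split; eapply admissible_vertex_angle; eauto; try discriminate; rewrite dot_sym; auto.
Qed.

Lemma admissible_good : good c a b cc d.
Proof.
  split; [apply admissible_unit_normals|].
  split; [apply admissible_general_position | apply admissible_quad_face].
Qed.
End AdmissibleConfig.

Lemma admissible_rotate n1 n2 n3 n4 a b c d :
  admissible n1 n2 n3 n4 a b c d -> admissible n2 n3 n4 n1 b c d a.
Proof.
  intros [U1 U2 U3 U4 Ha Hb Hc Hd E12 E23 E34 E41 Z1 Z2 Z3].
  constructor; auto.
  - rewrite <- (det3_cycle n1 n2 n3), Rmult_comm. auto.
  - rewrite <- (det3_cycle n1 n2 n4).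
    apply (same_sign_trans _ (det3 n1 n2 n3)); [rewrite Rmult_comm|]; auto.
  - rewrite <- (det3_cycle n1 n3 n4).
    apply (same_sign_trans _ (det3 n1 n2 n3)); [rewrite Rmult_comm|]; auto.
Qed.

Definition rot (i : idx) : idx := match i with I1 => I2 | I2 => I3 | I3 => I4 | I4 => I1 end.

Lemma good_rotate c a b cc d : good c a b cc d -> good (fun i => c (rot i)) b cc d a.
Proof.
  intros Hg. apply admissible_good, admissible_rotate, good_admissible, Hg.
Qed.

Lemma pow2_pos_of_neq0 x : x <> 0 -> 0 < x^2.
Proof. intros. rewrite <- Rsqr_pow2. apply Rsqr_pos_lt; auto. Qed.

Lemma acos_le_of_cos_le x z : 0 <= x <= PI -> -1 <= z <= 1 -> cos x <= z -> acos z <= x.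
Proof.
  intros Hx Hz Hc. destruct (Rle_or_lt (acos z) x) as [H|H]; auto.
  pose proof (acos_bound z).
  assert (cos (acos z) < cos x) by (apply cos_decreasing_1; lra).
  rewrite cos_acos in H1 by lra. lra.
Qed.

Lemma acos_lt_of_cos_lt x z : 0 <= x <= PI -> -1 <= z <= 1 -> cos x < z -> acos z < x.
Proof.
  intros Hx Hz Hc. destruct (Rlt_or_le (acos z) x) as [H|H]; auto.
  pose proof (acos_bound z).
  destruct (Rle_lt_or_eq_dec _ _ H) as [H1|H1].
  - assert (cos (acos z) < cos x) by (apply cos_decreasing_1; lra).
    rewrite cos_acos in H2 by lra. lra.
  - rewrite H1, cos_acos in Hc by lra. lra.
Qed.

Lemma acos_antimono z1 z2 : -1 <= z1 <= 1 -> -1 <= z2 <= 1 -> z1 <= z2 -> acos z2 <= acos z1.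
Proof. intros. apply acos_le_of_cos_le; auto. apply acos_bound. rewrite cos_acos; auto. Qed.

Lemma sqrt_prod_le_of_sqr a b e : -1 <= a <= 1 -> -1 <= b <= 1 ->
  (e - a*b)^2 <= (1 - a^2) * (1 - b^2) -> a * b - sqrt (1 - a^2) * sqrt (1 - b^2) <= e.
Proof.
  intros Ha Hb H.
  rewrite <- sqrt_mult by nra.
  destruct (Rle_or_lt 0 (e - a*b)).
  - pose proof (sqrt_pos ((1 - a ^ 2) * (1 - b ^ 2))). lra.
  - assert (sqrt ((e - a*b)^2) <= sqrt ((1 - a ^ 2) * (1 - b ^ 2))) by (apply sqrt_le_1_alt; auto).
    rewrite <- Rsqr_pow2, Rsqr_neg, sqrt_Rsqr in H1 by lra. lra.
Qed.

Lemma sqrt_prod_lt_of_sqr a b e : -1 <= a <= 1 -> -1 <= b <= 1 ->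
  (e - a*b)^2 < (1 - a^2) * (1 - b^2) -> a * b - sqrt (1 - a^2) * sqrt (1 - b^2) < e.
Proof.
  intros Ha Hb H.
  rewrite <- sqrt_mult by nra.
  destruct (Rle_or_lt 0 (e - a*b)).
  - assert (0 < sqrt ((1 - a ^ 2) * (1 - b ^ 2))) by (apply sqrt_lt_R0; nra). lra.
  - assert (sqrt ((e - a*b)^2) < sqrt ((1 - a ^ 2) * (1 - b ^ 2)))
      by (apply sqrt_lt_1_alt; split; nra).
    rewrite <- Rsqr_pow2, Rsqr_neg, sqrt_Rsqr in H1 by lra. lra.
Qed.

(* With a = u.v, b = v.w, e = u.w and g = det3 u v w for unit vectors, the hypothesis is
   the Gram identity; the conclusion is the spherical triangle inequality. *)
Lemma acos_triangle a b e g : -1 <= a <= 1 -> -1 <= b <= 1 -> -1 <= e <= 1 ->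
  (e - a*b)^2 + g^2 = (1 - a^2) * (1 - b^2) ->
  acos e <= acos a + acos b /\ (g <> 0 -> acos e < acos a + acos b).
Proof.
  intros Ha Hb He Hg.
  pose proof (acos_bound a). pose proof (acos_bound b). pose proof (acos_bound e).
  destruct (Rle_or_lt PI (acos a + acos b)) as [Hs|Hs].
  - split; [lra|]. intro Hg0. pose proof (pow2_pos_of_neq0 g Hg0).
    assert (e <> -1).
    { intro E. rewrite E in Hg. pose proof (pow2_ge_0 (a+b)).
      assert ((-1 - a*b)^2 = (1-a^2)*(1-b^2) + (a+b)^2) by ring. lra. }
    destruct (Rlt_or_le e 1).
    + pose proof (acos_bound_lt e ltac:(lra)). lra.
    + replace e with 1 by lra. rewrite acos_1. pose proof PI_RGT_0. lra.
  - assert (Cs : cos (acos a + acos b) = a * b - sqrt (1 - a^2) * sqrt (1 - b^2)).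
    { rewrite cos_plus, !cos_acos, !sin_acos by lra. rewrite !Rsqr_pow2. reflexivity. }
    split.
    + apply acos_le_of_cos_le; [lra|lra|]. rewrite Cs. apply sqrt_prod_le_of_sqr; auto.
      pose proof (pow2_ge_0 g). lra.
    + intro Hg0. apply acos_lt_of_cos_lt; [lra|lra|]. rewrite Cs. apply sqrt_prod_lt_of_sqr; auto.
      pose proof (pow2_pos_of_neq0 g Hg0). lra.
Qed.

Definition arc_dist (u v : vec3) : R := acos (dot u v).

Lemma arc_dist_triangle u v w : dot u u = 1 -> dot v v = 1 -> dot w w = 1 ->
  arc_dist u w <= arc_dist u v + arc_dist v w /\
  (det3 u v w <> 0 -> arc_dist u w < arc_dist u v + arc_dist v w).
Proof.
  intros Hu Hv Hw. unfold arc_dist.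
  apply acos_triangle; try apply unit_dot_bound; auto.
  pose proof (det3_sqr_gram u v w) as G. rewrite Hu, Hv, Hw in G. rewrite G. ring.
Qed.

Lemma le_of_sqr_le x y : 0 <= x -> 0 <= y -> x * x <= y * y -> x <= y.
Proof. intros. nra. Qed.

Lemma cone_dot_ge lam mu N e s : 0 < lam -> 0 < mu -> 0 < N -> -1 <= e <= 1 ->
  N * N = lam^2 + mu^2 + 2*lam*mu*e -> N * s = lam + mu * e -> e <= s.
Proof.
  intros Hl Hm HN He E3 E1.
  apply (Rmult_le_reg_l N); auto. rewrite E1.
  destruct (Rle_or_lt 0 e).
  - assert (N <= lam + mu).
    { apply le_of_sqr_le; try lra. rewrite E3.
      assert (0 <= lam*mu*(1-e)) by (apply Rmult_le_pos; [apply Rmult_le_pos|]; lra). nra. }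
    assert (e * N <= e * (lam + mu)) by (apply Rmult_le_compat_l; lra).
    nra.
  - assert (mu + lam * e <= N).
    { destruct (Rle_or_lt (mu + lam * e) 0). lra. apply le_of_sqr_le; try lra. rewrite E3.
      assert (0 <= lam*lam*(1-e*e)) by (apply Rmult_le_pos; nra). nra. }
    assert (e * N <= e * (mu + lam * e)) by (apply Rmult_le_compat_neg_l; lra).
    assert (0 <= lam*(1 - e*e)) by (apply Rmult_le_pos; nra). nra.
Qed.

Lemma arc_dist_cone Q X Y lam mu N : dot Q Q = 1 -> dot X X = 1 -> dot Y Y = 1 ->
  0 < lam -> 0 < mu -> 0 < N -> vscale N X = vadd (vscale lam Q) (vscale mu Y) ->
  arc_dist Q X + arc_dist X Y <= arc_dist Q Y.
Proof.
  intros HQ HX HY Hl Hm HN E.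
  unfold arc_dist.
  pose proof (unit_dot_bound Q Y HQ HY) as Bc.
  pose proof (unit_dot_bound Q X HQ HX) as B1.
  set (e := dot Q Y) in *. set (s1 := dot Q X) in *. set (s2 := dot X Y).
  assert (E1 : N * s1 = lam + mu * e).
  { transitivity (dot Q (vscale N X)); [unfold s1; vec_coords; ring|]. rewrite E.
    transitivity (lam * dot Q Q + mu * dot Q Y); [vec_coords; ring|].
    rewrite HQ; fold e; ring. }
  assert (E2 : N * s2 = lam * e + mu).
  { transitivity (dot (vscale N X) Y); [unfold s2; vec_coords; ring|]. rewrite E.
    transitivity (lam * dot Q Y + mu * dot Y Y); [vec_coords; ring|]. rewrite HY; fold e; ring. }
  assert (E3 : N * N = lam^2 + mu^2 + 2*lam*mu*e).
  { transitivity (dot (vscale N X) (vscale N X)).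
    - replace (dot (vscale N X) (vscale N X)) with (N*N*dot X X) by (vec_coords; ring).
      rewrite HX; ring.
    - rewrite E.
      transitivity (lam^2 * dot Q Q + mu^2 * dot Y Y + 2*lam*mu*dot Q Y); [vec_coords; ring|].
      rewrite HQ, HY; fold e; ring. }
  assert (Hs1 : e <= s1) by (apply (cone_dot_ge lam mu N); auto).
  assert (Hsin : 1 - s1^2 = (mu * sqrt (1 - e^2) / N)^2).
  { assert (Hsq : sqrt (1 - e^2) ^2 = 1 - e^2) by (rewrite <- Rsqr_pow2; apply Rsqr_sqrt; nra).
    apply (Rmult_eq_reg_l (N*N)); [|nra].
    replace (N*N*(mu * sqrt (1 - e^2) / N)^2) with (mu^2 * sqrt (1 - e^2)^2) by (field; lra).
    rewrite Hsq. replace (N * N * (1 - s1 ^ 2)) with (N*N - (N*s1)^2) by ring.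
    rewrite E1, E3. ring. }
  assert (Cs : cos (acos e - acos s1) = s2).
  { rewrite cos_minus, !cos_acos, !sin_acos by lra. rewrite !Rsqr_pow2, Hsin, sqrt_pow2.
    2:{ apply Rmult_le_pos; [apply Rmult_le_pos; [lra|apply sqrt_pos]|].
        left; apply Rinv_0_lt_compat; lra. }
    apply (Rmult_eq_reg_l N); [|lra].
    transitivity (e * (N * s1) + mu * (sqrt (1 - e^2) * sqrt (1 - e^2))); [field; lra|].
    rewrite sqrt_sqrt by nra. rewrite E1, E2. ring. }
  assert (acos s1 <= acos e) by (apply acos_antimono; auto).
  pose proof (acos_bound s1). pose proof (acos_bound e).
  rewrite <- Cs, acos_cos by lra. lra.
Qed.

(* Euclid I.21 on the sphere: X strictly inside the triangle QPR. *)
Lemma arc_dist_inside_triangle P Q R X lam mu nu N :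
  dot P P = 1 -> dot Q Q = 1 -> dot R R = 1 -> dot X X = 1 ->
  0 < lam -> 0 < mu -> 0 < nu -> 0 < N ->
  vscale N X = vadd (vscale lam P) (vadd (vscale mu Q) (vscale nu R)) -> det3 Q P R <> 0 ->
  arc_dist Q X + arc_dist X R < arc_dist Q P + arc_dist P R.
Proof.
  intros HP HQ HR HX Hl Hm Hn HN E Hd.
  set (W := vadd (vscale lam P) (vscale nu R)).
  assert (DW : det3 Q P W = nu * det3 Q P R) by (unfold W; vec_coords; ring).
  assert (HW : 0 < dot W W).
  { destruct (Rlt_or_le 0 (dot W W)) as [h|h]; auto.
    assert (H0 : W = V3 0 0 0) by (apply dot_self_eq0; pose proof (dot_self_ge0 W); lra).
    exfalso. apply Hd. rewrite H0 in DW.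
    replace (det3 Q P (V3 0 0 0)) with 0 in DW by (vec_coords; ring).
    apply (Rmult_eq_reg_l nu); lra. }
  destruct (normalize_unit W HW) as [HY _].
  assert (HM0 : 0 < norm W) by (apply sqrt_lt_R0; auto).
  set (M := norm W) in *. set (Y := vscale (/ M) W) in *.
  assert (EY : vscale M Y = vadd (vscale lam P) (vscale nu R)).
  { unfold Y, W. vec_coords. apply vec3_ext; simpl; field; lra. }
  assert (EX : vscale N X = vadd (vscale mu Q) (vscale M Y)).
  { rewrite E, EY. vec_ring. }
  assert (DY : det3 Q P Y <> 0).
  { replace (det3 Q P Y) with (/ M * det3 Q P W) by (unfold Y; vec_coords; ring).
    rewrite DW. apply Rmult_integral_contrapositive; split; [apply Rinv_neq_0_compat; lra|].
    apply Rmult_integral_contrapositive; split; lra. }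
  destruct (arc_dist_triangle X Y R HX HY HR) as [T1 _].
  pose proof (arc_dist_cone Q X Y mu M N HQ HX HY Hm HM0 HN EX) as A1.
  destruct (arc_dist_triangle Q P Y HQ HP HY) as [_ T2].
  pose proof (arc_dist_cone P Y R lam nu M HP HY HR Hl Hn HM0 EY) as A2.
  specialize (T2 DY). lra.
Qed.

Lemma arc_dist_of_dot u v x : dot u v = - cos (PI * x) -> 0 < x < 1 ->
  arc_dist u v = PI - PI * x.
Proof.
  intros H Hx. pose proof PI_RGT_0.
  unfold arc_dist. rewrite H, acos_opp, acos_cos; auto. nra.
Qed.

(* The linear dependence of the four normals has coefficients of one sign, so [n3] lies inside
   the spherical triangle [n2, -n1, n4]; Euclid I.21 then bounds the angle sum. *)
Lemma admissible_angle_sum_gt2 n1 n2 n3 n4 a b c d :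
  admissible n1 n2 n3 n4 a b c d -> 2 < a + b + c + d.
Proof.
  intros [U1 U2 U3 U4 Ha Hb Hc Hd E12 E23 E34 E41 Z1 Z2 Z3].
  pose proof PI_RGT_0.
  set (P := vscale (-1) n1).
  assert (UP : dot P P = 1) by (unfold P; rewrite <- U1; vec_coords; ring).
  assert (dQP : arc_dist n2 P = PI - PI * (1 - a)).
  { apply arc_dist_of_dot; [|lra]. unfold P. rewrite dot_scale_r, dot_sym, E12.
    replace (PI * (1 - a)) with (PI - PI * a) by ring. rewrite cos_minus, cos_PI, sin_PI. ring. }
  assert (dPR : arc_dist P n4 = PI - PI * (1 - d)).
  { apply arc_dist_of_dot; [|lra]. unfold P. rewrite dot_sym, dot_scale_r, E41.
    replace (PI * (1 - d)) with (PI - PI * d) by ring. rewrite cos_minus, cos_PI, sin_PI. ring. }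
  assert (DQPR : det3 n2 P n4 <> 0).
  { unfold P. replace (det3 n2 (vscale (-1) n1) n4) with (det3 n1 n2 n4) by (vec_coords; ring).
    intro E. rewrite E in Z1. lra. }
  assert (H21 : arc_dist n2 n3 + arc_dist n3 n4 < arc_dist n2 P + arc_dist P n4).
  { pose proof (det3_linear_dependence_vec n1 n2 n3 n4) as L. fold P in L.
    destruct (Rlt_or_le 0 (det3 n1 n2 n3)) as [Hp|Hn].
    - apply (arc_dist_inside_triangle P n2 n4 n3
        (det3 n2 n3 n4) (det3 n1 n3 n4) (det3 n1 n2 n3) (det3 n1 n2 n4)); auto; nra.
    - destruct (neg_of_nonpos_prod_pos _ _ Hn Z1). destruct (neg_of_nonpos_prod_pos _ _ Hn Z2).
      destruct (neg_of_nonpos_prod_pos _ _ Hn Z3).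
      apply (arc_dist_inside_triangle P n2 n4 n3
        (- det3 n2 n3 n4) (- det3 n1 n3 n4) (- det3 n1 n2 n3) (- det3 n1 n2 n4)); auto; try lra.
      replace (vscale (- det3 n1 n2 n4) n3) with (vscale (-1) (vscale (det3 n1 n2 n4) n3))
        by vec_ring.
      rewrite L. vec_ring. }
  rewrite (arc_dist_of_dot n2 n3 b), (arc_dist_of_dot n3 n4 c), dQP, dPR in H21; auto.
  assert (PI * 2 < PI * (a + b + c + d)) by lra.
  apply Rmult_lt_reg_l in H0; lra.
Qed.

Lemma admissible_angle_sum_lt2 n1 n2 n3 n4 a b c d :
  admissible n1 n2 n3 n4 a b c d -> a + b + c - d < 2.
Proof.
  intros [U1 U2 U3 U4 Ha Hb Hc Hd E12 E23 E34 E41 Z1 Z2 Z3].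
  pose proof PI_RGT_0.
  destruct (arc_dist_triangle n4 n2 n1 U4 U2 U1) as [_ T1].
  destruct (arc_dist_triangle n4 n3 n2 U4 U3 U2) as [T2 _].
  rewrite (dot_sym n1 n2) in E12. rewrite (dot_sym n3 n4) in E34. rewrite (dot_sym n2 n3) in E23.
  rewrite (arc_dist_of_dot n4 n1 d), (arc_dist_of_dot n2 n1 a) in T1 by auto.
  rewrite (arc_dist_of_dot n4 n3 c), (arc_dist_of_dot n3 n2 b) in T2 by auto.
  assert (N : det3 n4 n2 n1 <> 0).
  { rewrite det3_cycle, det3_swap12. intro E.
    assert (det3 n1 n2 n4 = 0) by lra. rewrite H0 in Z1. lra. }
  specialize (T1 N).
  assert (PI * (a + b + c - d) < PI * 2) by lra.
  apply Rmult_lt_reg_l in H0; lra.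
Qed.

Lemma admissible_angle_sum_lt2' n1 n2 n3 n4 a b c d :
  admissible n1 n2 n3 n4 a b c d -> a + b + d - c < 2.
Proof.
  intros H. do 3 apply admissible_rotate in H.
  apply admissible_angle_sum_lt2 in H. lra.
Qed.

Lemma cos_lt_of_abs_lt x y : 0 <= y <= PI -> Rabs x < y -> cos y < cos x.
Proof.
  intros Hy Hx. destruct (Rle_or_lt 0 x).
  - rewrite Rabs_right in Hx by lra. apply cos_decreasing_1; lra.
  - rewrite Rabs_left in Hx by lra. rewrite <- (cos_neg x). apply cos_decreasing_1; lra.
Qed.

Lemma cos_sub_2PI x : cos (x - 2 * PI) = cos x.
Proof. rewrite cos_minus, cos_2PI, sin_2PI. ring. Qed.

Lemma angle_sum_trig_ineqs a b c d : 0 < a < 1 -> 0 < b < 1 -> 0 < c < 1 -> 0 < d < 1 ->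
  c + d < a + b -> 2 < a + b + c + d -> a + b + c - d < 2 -> a + b + d - c < 2 ->
  sin (PI*a + PI*b) < 0 /\ cos (PI*c + PI*d) < cos (PI*a + PI*b) /\
  cos (PI*c) < cos (PI*a + PI*b + PI*d) /\ cos (PI*d) < cos (PI*a + PI*b + PI*c).
Proof.
  intros Ha Hb Hc Hd H1 H2 H3 H4.
  pose proof PI_RGT_0.
  assert (0 < PI*a < PI /\ 0 < PI*b < PI /\ 0 < PI*c < PI /\ 0 < PI*d < PI) by (repeat split; nra).
  assert (PI*c + PI*d < PI*a + PI*b /\ 2*PI < PI*a + PI*b + PI*c + PI*d /\
          PI*a + PI*b + PI*c - PI*d < 2*PI /\ PI*a + PI*b + PI*d - PI*c < 2*PI)
    by (repeat split; nra).
  set (al := PI*a) in *. set (be := PI*b) in *. set (ga := PI*c) in *. set (de := PI*d) in *.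
  clearbody al be ga de. clear Ha Hb Hc Hd H1 H2 H3 H4.
  assert (Cu : cos (al + be) = cos (al + be - 2*PI)) by (rewrite cos_sub_2PI; auto).
  split; [apply sin_lt_0; lra|]. split; [|split].
  - rewrite Cu. destruct (Rle_or_lt (ga + de) PI).
    + apply cos_lt_of_abs_lt; [lra|]. unfold Rabs. destruct Rcase_abs; lra.
    + rewrite <- (cos_sub_2PI (ga + de)), <- (cos_neg (ga + de - 2 * PI)).
      apply cos_lt_of_abs_lt; [lra|]. unfold Rabs. destruct Rcase_abs; lra.
  - rewrite <- (cos_sub_2PI (al + be + de)).
    apply cos_lt_of_abs_lt; [lra|]. unfold Rabs. destruct Rcase_abs; lra.
  - rewrite <- (cos_sub_2PI (al + be + ga)).
    apply cos_lt_of_abs_lt; [lra|]. unfold Rabs. destruct Rcase_abs; lra.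
Qed.

(* [(A, sA)] is the cosine and sine of the angle of F at C1 ∩ C2; in the orthonormal frame
   [(n1, e2, e3)] below, [n2 = -A n1 + sA e2], and [sg] fixes the orientation. *)
Record frame_hyp (n1 n2 : vec3) (A sA sg : R) : Prop := {
  frame_unit1 : dot n1 n1 = 1; frame_unit2 : dot n2 n2 = 1; frame_dot12 : dot n1 n2 = - A;
  frame_pythagoras : A^2 + sA^2 = 1; frame_sA_pos : 0 < sA; frame_sg : sg = 1 \/ sg = -1 }.

Definition frame_e2 (n1 n2 : vec3) (A sA : R) : vec3 := vscale (/ sA) (vadd n2 (vscale A n1)).
Definition frame_e3 (n1 n2 : vec3) (A sA sg : R) : vec3 :=
  vscale sg (cross n1 (frame_e2 n1 n2 A sA)).

Section Frame.
Variables (n1 n2 : vec3) (A sA sg : R).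
Hypothesis Hf : frame_hyp n1 n2 A sA sg.
Local Notation e2 := (frame_e2 n1 n2 A sA).
Local Notation e3 := (frame_e3 n1 n2 A sA sg).

Lemma frame_orthonormal :
  dot n1 n1 = 1 /\ dot e2 e2 = 1 /\ dot e3 e3 = 1 /\
  dot n1 e2 = 0 /\ dot n1 e3 = 0 /\ dot e2 e3 = 0 /\ det3 n1 e2 e3 = sg.
Proof.
  destruct Hf as [H1 H2 H12 HA Hs Hg].
  assert (Hsg2 : sg * sg = 1) by (destruct Hg as [-> | ->]; ring).
  assert (E2 : dot e2 e2 = 1).
  { unfold frame_e2.
    replace (dot (vscale (/ sA) (vadd n2 (vscale A n1))) (vscale (/ sA) (vadd n2 (vscale A n1))))
      with ((dot n2 n2 + 2*A*dot n1 n2 + A*A*dot n1 n1)/(sA*sA)) by (vec_coords; field; lra).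
    rewrite H1, H2, H12. replace (1 + 2 * A * - A + A * A * 1) with (sA * sA) by nra.
    field. lra. }
  assert (E12 : dot n1 e2 = 0).
  { unfold frame_e2. replace (dot n1 (vscale (/ sA) (vadd n2 (vscale A n1))))
      with ((dot n1 n2 + A*dot n1 n1)/sA) by (vec_coords; field; lra).
    rewrite H1, H12. field; lra. }
  assert (C : dot (cross n1 e2) (cross n1 e2) = 1).
  { rewrite cross_dot_self, H1, E2, E12. ring. }
  unfold frame_e3.
  repeat split; auto.
  - rewrite dot_scale_r, dot_sym, dot_scale_r, C. lra.
  - vec_coords. ring.
  - vec_coords. ring.
  - replace (det3 n1 e2 (vscale sg (cross n1 e2))) with (sg * dot (cross n1 e2) (cross n1 e2))
      by (vec_coords; ring). rewrite C. ring.
Qed.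

Lemma frame_expand v : v = lincomb n1 e2 e3 (dot v n1) (dot v e2) (dot v e3).
Proof.
  destruct frame_orthonormal as [O1 [O2 [_ [O12 _]]]].
  rewrite (orthonormal_expansion n1 e2 v) at 1 by auto.
  unfold frame_e3. rewrite dot_scale_r.
  destruct (frame_sg _ _ _ _ _ Hf) as [-> | ->]; vec_ring.
Qed.

Lemma dot_frame_lincomb x y z x' y' z' :
  dot (lincomb n1 e2 e3 x y z) (lincomb n1 e2 e3 x' y' z') = x*x' + y*y' + z*z'.
Proof.
  destruct frame_orthonormal as [O1 [O2 [O3 [O12 [O13 [O23 _]]]]]]. apply dot_lincomb; auto.
Qed.

Lemma frame_n1 : n1 = lincomb n1 e2 e3 1 0 0.
Proof. vec_ring. Qed.

Lemma frame_n2 : n2 = lincomb n1 e2 e3 (-A) sA 0.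
Proof.
  pose proof (frame_sA_pos _ _ _ _ _ Hf).
  unfold frame_e2. vec_coords. apply vec3_ext; simpl; field; lra.
Qed.

Lemma frame_coords x y z :
  dot (lincomb n1 e2 e3 x y z) n1 = x /\ dot (lincomb n1 e2 e3 x y z) e2 = y /\
  dot (lincomb n1 e2 e3 x y z) e3 = z.
Proof.
  set (v := lincomb n1 e2 e3 x y z).
  assert (H1 : dot v (lincomb n1 e2 e3 1 0 0) = x) by (unfold v; rewrite dot_frame_lincomb; ring).
  assert (H2 : dot v (lincomb n1 e2 e3 0 1 0) = y) by (unfold v; rewrite dot_frame_lincomb; ring).
  assert (H3 : dot v (lincomb n1 e2 e3 0 0 1) = z) by (unfold v; rewrite dot_frame_lincomb; ring).
  rewrite <- frame_n1 in H1.
  replace (lincomb n1 e2 e3 0 1 0) with e2 in H2 by vec_ring.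
  replace (lincomb n1 e2 e3 0 0 1) with e3 in H3 by vec_ring.
  auto.
Qed.

Lemma dot_frame_e2 v : dot v e2 = (dot v n2 + A * dot v n1) / sA.
Proof. pose proof (frame_sA_pos _ _ _ _ _ Hf). unfold frame_e2. vec_coords. field. lra. Qed.

Lemma dot_frame_e3 v : dot v e3 = sg * det3 n1 n2 v / sA.
Proof.
  pose proof (frame_sA_pos _ _ _ _ _ Hf). unfold frame_e3, frame_e2. vec_coords. field. lra.
Qed.

Lemma frame_ext v w : dot v n1 = dot w n1 -> dot v e2 = dot w e2 -> dot v e3 = dot w e3 -> v = w.
Proof. intros H1 H2 H3. rewrite (frame_expand v), (frame_expand w), H1, H2, H3. reflexivity. Qed.
End Frame.

(* The Gram determinant [(det3 n1 n2 n3)^2] of unit vectors with [n1.n2 = -A], [n2.n3 = -B]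
   and [n1.n3 = p]. *)
Definition gram (A B p : R) : R := 1 - A^2 - B^2 - p^2 + 2*A*B*p.

Lemma gram_sym A B p : gram A B p = gram B A p.
Proof. unfold gram. ring. Qed.

Lemma gram_pythagoras A B p : (A*p - B)^2 + gram A B p = (1 - A^2) * (1 - p^2).
Proof. unfold gram. ring. Qed.

Lemma gram_factor A B sA sB p : A^2 + sA^2 = 1 -> B^2 + sB^2 = 1 ->
  gram A B p = (p - (A*B - sA*sB)) * ((A*B + sA*sB) - p).
Proof.
  intros HA HB. unfold gram.
  replace (1 - A^2 - B^2) with (sA^2*sB^2 - A^2*B^2) by nra. ring.
Qed.

(* [n3] is determined by [n1.n3 = p], [n2.n3 = -B] and the sign [sg] of [det3 n1 n2 n3];
   [n4] by [n3.n4 = -C], [n4.n1 = -D] and the same sign of [det3 n1 n3 n4]. *)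
Definition beta3 (A B sA p : R) : R := (A*p - B) / sA.
Definition gamma3 (A B sA p : R) : R := sqrt (gram A B p) / sA.
Definition beta4 (A B C D sA p : R) : R :=
  ((p*D - C) * beta3 A B sA p - sqrt (gram C D p) * gamma3 A B sA p) / (1 - p^2).
Definition gamma4 (A B C D sA p : R) : R :=
  ((p*D - C) * gamma3 A B sA p + sqrt (gram C D p) * beta3 A B sA p) / (1 - p^2).
Definition diag_n3 (n1 n2 : vec3) (A B sA sg p : R) : vec3 :=
  lincomb n1 (frame_e2 n1 n2 A sA) (frame_e3 n1 n2 A sA sg) p (beta3 A B sA p) (gamma3 A B sA p).
Definition diag_n4 (n1 n2 : vec3) (A B C D sA sg p : R) : vec3 :=
  lincomb n1 (frame_e2 n1 n2 A sA) (frame_e3 n1 n2 A sA sg) (-D)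
    (beta4 A B C D sA p) (gamma4 A B C D sA p).

Lemma beta3_gamma3_sqr A B sA p : A^2 + sA^2 = 1 -> 0 < sA -> 0 <= gram A B p ->
  beta3 A B sA p ^2 + gamma3 A B sA p ^2 = 1 - p^2.
Proof.
  intros HA Hs Hg. unfold beta3, gamma3.
  replace (((A*p - B)/sA)^2) with ((A*p - B)^2 / sA^2) by (field; lra).
  replace ((sqrt (gram A B p) / sA)^2) with (sqrt (gram A B p) * sqrt (gram A B p) / sA^2)
    by (field; lra).
  rewrite sqrt_sqrt by lra.
  apply (Rmult_eq_reg_l (sA^2)); [|nra].
  field_simplify; [|lra]. pose proof (gram_pythagoras A B p). nra.
Qed.

Lemma beta4_gamma4_spec A B C D sA p : A^2 + sA^2 = 1 -> 0 < sA ->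
  0 <= gram A B p -> 0 <= gram C D p -> 0 < 1 - p^2 ->
  let be := beta3 A B sA p in let ga := gamma3 A B sA p in
  let y := beta4 A B C D sA p in let z := gamma4 A B C D sA p in
  y^2 + z^2 = 1 - D^2 /\ be*y + ga*z = p*D - C /\ be*z - ga*y = sqrt (gram C D p).
Proof.
  intros HA Hs Hab Hcd HK be ga y z.
  set (K := 1 - p^2) in *. set (G := sqrt (gram C D p)).
  assert (HG2 : G * G = gram C D p) by (apply sqrt_sqrt; auto).
  assert (Hbg : be^2 + ga^2 = K) by (apply beta3_gamma3_sqr; auto).
  unfold y, z, beta4, gamma4. fold be ga G K. split; [|split].
  - apply (Rmult_eq_reg_l (K^2)); [|nra]. field_simplify; [|lra].
    transitivity (((p*D - C)^2 + G*G) * (be^2 + ga^2)); [ring|].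
    rewrite HG2, Hbg. pose proof (gram_pythagoras D C p). unfold gram in *. unfold K. nra.
  - field_simplify; [|lra].
    transitivity ((p*D - C) * (be^2 + ga^2) / K); [field; lra|]. rewrite Hbg. field; lra.
  - transitivity (G * (be^2 + ga^2) / K); [field; lra|]. rewrite Hbg. field; lra.
Qed.

Lemma diag_normals_spec n1 n2 A B C D sA sg p : frame_hyp n1 n2 A sA sg ->
  0 <= gram A B p -> 0 <= gram C D p -> 0 < 1 - p^2 ->
  let n3 := diag_n3 n1 n2 A B sA sg p in let n4 := diag_n4 n1 n2 A B C D sA sg p in
  dot n3 n3 = 1 /\ dot n4 n4 = 1 /\ dot n1 n3 = p /\ dot n2 n3 = -B /\ dot n3 n4 = -C /\
  dot n4 n1 = -D /\ det3 n1 n2 n3 = sg * sqrt (gram A B p) /\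
  det3 n1 n3 n4 = sg * sqrt (gram C D p).
Proof.
  intros Hf Hab Hcd HK n3 n4.
  destruct (frame_orthonormal n1 n2 A sA sg Hf) as [_ [_ [_ [_ [_ [_ Od]]]]]].
  pose proof (frame_sA_pos _ _ _ _ _ Hf) as Hs. pose proof (frame_pythagoras _ _ _ _ _ Hf) as HA.
  pose proof (beta3_gamma3_sqr A B sA p HA Hs Hab) as Hbg.
  destruct (beta4_gamma4_spec A B C D sA p) as [Hyz [Hby Hbz]]; auto.
  set (e2 := frame_e2 n1 n2 A sA) in *. set (e3 := frame_e3 n1 n2 A sA sg) in *.
  set (be := beta3 A B sA p) in *. set (ga := gamma3 A B sA p) in *.
  set (y := beta4 A B C D sA p) in *. set (z := gamma4 A B C D sA p) in *.
  pose proof (dot_frame_lincomb n1 n2 A sA sg Hf) as DC. fold e2 e3 in DC.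
  assert (R1 : n1 = lincomb n1 e2 e3 1 0 0) by apply frame_n1.
  assert (R2 : n2 = lincomb n1 e2 e3 (-A) sA 0) by (apply frame_n2; auto).
  unfold n3, n4, diag_n3, diag_n4. fold e2 e3 be ga y z.
  repeat split.
  - rewrite DC. nra.
  - rewrite DC. nra.
  - rewrite R1 at 1. rewrite DC. ring.
  - rewrite R2 at 1. rewrite DC. unfold be, beta3. field. lra.
  - rewrite DC. lra.
  - rewrite R1 at 2. rewrite DC. ring.
  - rewrite R1 at 1. rewrite R2 at 1. rewrite det3_lincomb, Od.
    unfold ga, gamma3. vec_coords. field. lra.
  - rewrite R1 at 1. rewrite det3_lincomb, Od.
    replace (det3 (V3 1 0 0) (V3 p be ga) (V3 (-D) y z)) with (be*z - ga*y) by (vec_coords; ring).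
    rewrite Hbz. ring.
Qed.

Lemma det3_relations n1 n2 n3 n4 A B C D p :
  dot n1 n1 = 1 -> dot n3 n3 = 1 ->
  dot n1 n2 = -A -> dot n2 n3 = -B -> dot n3 n4 = -C -> dot n4 n1 = -D -> dot n1 n3 = p ->
  (1 - p^2) * det3 n1 n2 n4 = (p*A - B) * det3 n1 n3 n4 + (p*D - C) * det3 n1 n2 n3 /\
  (1 - p^2) * det3 n2 n3 n4 = (p*B - A) * det3 n1 n3 n4 + (p*C - D) * det3 n1 n2 n3.
Proof.
  intros H1 H3 E12 E23 E34 E41 E13.
  pose proof (det3_linear_dependence n1 n2 n3 n4 n1) as L1.
  pose proof (det3_linear_dependence n1 n2 n3 n4 n3) as L3.
  rewrite H1, (dot_sym n2 n1), E12, (dot_sym n3 n1), E13, E41 in L1.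
  rewrite E13, E23, H3, (dot_sym n4 n3), E34 in L3.
  split.
  - transitivity ((1 - p^2) * det3 n1 n2 n4 + p * (det3 n2 n3 n4 * 1 - det3 n1 n3 n4 * - A
      + det3 n1 n2 n4 * p - det3 n1 n2 n3 * - D) - (det3 n2 n3 n4 * p - det3 n1 n3 n4 * - B
      + det3 n1 n2 n4 * 1 - det3 n1 n2 n3 * - C)); [rewrite L1, L3; ring | ring].
  - transitivity ((1 - p^2) * det3 n2 n3 n4 - (det3 n2 n3 n4 * 1 - det3 n1 n3 n4 * - A
      + det3 n1 n2 n4 * p - det3 n1 n2 n3 * - D) + p * (det3 n2 n3 n4 * p - det3 n1 n3 n4 * - B
      + det3 n1 n2 n4 * 1 - det3 n1 n2 n3 * - C)); [rewrite L1, L3; ring | ring].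
Qed.

Definition side_form (A B C D sA sD p : R) : R := sD*(p*A - B) + sA*(p*D - C).

(* In polar form (X_i, Y_i) = r_i (cos t_i, sin t_i) with t_i in (0, pi), both sides of the
   equivalence say t1 + t2 < pi. *)
Lemma side_form_pos_iff K sA sD X1 X2 Y1 Y2 : 0 < K -> 0 < sA -> 0 < sD ->
  X1^2 + Y1^2 = sA^2*K -> X2^2 + Y2^2 = sD^2*K -> 0 < Y1 -> 0 < Y2 ->
  0 < sD*X1 + sA*X2 <-> 0 < X1*Y2 + X2*Y1.
Proof.
  intros HK HA HD H1 H2 HY1 HY2.
  set (L := sD*X1 + sA*X2). set (M := sA*sD*K + X1*X2 - Y1*Y2).
  assert (I1 : (X1*Y2 + X2*Y1) * L = M * (sD*Y1 + sA*Y2)).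
  { unfold L, M. transitivity ((sA*sD*K + X1*X2 - Y1*Y2) * (sD*Y1 + sA*Y2) +
      (sD*Y2*(X1^2+Y1^2 - sA^2*K) + sA*Y1*(X2^2+Y2^2-sD^2*K))); [ring|].
    rewrite H1, H2. ring. }
  assert (I2 : L^2 + (sD*Y1 - sA*Y2)^2 = 2*sA*sD*M).
  { unfold L, M. transitivity (2*sA*sD*(sA*sD*K + X1*X2 - Y1*Y2) +
      (sD^2*(X1^2+Y1^2 - sA^2*K) + sA^2*(X2^2+Y2^2-sD^2*K))); [ring|].
    rewrite H1, H2. ring. }
  assert (HW : 0 < sD*Y1 + sA*Y2) by nra.
  assert (HsAD : 0 < sA * sD) by nra.
  split; intro HL.
  - assert (0 < L^2) by nra. pose proof (pow2_ge_0 (sD*Y1 - sA*Y2)).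
    assert (0 < sA*sD*M) by lra. assert (0 < M) by nra.
    assert (0 < (X1*Y2 + X2*Y1) * L) by (rewrite I1; nra). nra.
  - pose proof (pow2_ge_0 L). pose proof (pow2_ge_0 (sD*Y1 - sA*Y2)).
    assert (0 <= sA*sD*M) by lra. assert (HM : 0 <= M) by nra.
    destruct (Rle_lt_or_eq_dec 0 M HM) as [HM'|HM'].
    + assert (0 < (X1*Y2 + X2*Y1) * L) by (rewrite I1; nra). nra.
    + rewrite <- HM' in I2.
      assert (L = 0 /\ sD*Y1 - sA*Y2 = 0) as [HL0 HE] by (split; nra).
      assert (HF : sD * (X1*Y2 + X2*Y1) = L*Y2 + X2*(sD*Y1 - sA*Y2)) by (unfold L; ring).
      rewrite HL0, HE in HF. nra.
Qed.

Definition sign_of (x : R) : R := if Rlt_dec 0 x then 1 else -1.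

Lemma sign_of_spec x y : 0 < x * y ->
  (sign_of x = 1 \/ sign_of x = -1) /\ 0 < sign_of x * x /\ 0 < sign_of x * y.
Proof.
  intros H. unfold sign_of. destruct (Rlt_dec 0 x) as [h|h].
  - split; [left; reflexivity|]. split; nra.
  - destruct (neg_of_nonpos_prod_pos x y) as [Hx Hy]; [lra|auto|].
    split; [right; reflexivity|]. split; lra.
Qed.

Lemma sqrt_sqr_signed s x : (s = 1 \/ s = -1) -> 0 < s * x -> sqrt (x^2) = s * x.
Proof.
  intros Hs H. replace (x^2) with ((s*x)^2) by (destruct Hs as [-> | ->]; ring).
  apply sqrt_pow2. lra.
Qed.

Lemma sin_cos_PI_mul x : 0 < x < 1 -> 0 < sin (PI*x) /\ cos (PI*x)^2 + sin (PI*x)^2 = 1.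
Proof.
  intros. pose proof PI_RGT_0. split.
  - apply sin_gt_0; nra.
  - pose proof (sin2_cos2 (PI*x)). unfold Rsqr in *. nra.
Qed.

Lemma gram_pythagoras_sqrt A B sA p : A^2 + sA^2 = 1 -> 0 <= gram A B p ->
  (p*A - B)^2 + sqrt (gram A B p)^2 = sA^2 * (1 - p^2).
Proof.
  intros HA Hg. rewrite <- Rsqr_pow2 with (x := sqrt _), Rsqr_sqrt by lra.
  rewrite (Rmult_comm p A), gram_pythagoras. nra.
Qed.

Lemma root_between r1 r2 p : r1 < r2 -> 0 < (p - r1) * (r2 - p) -> r1 < p < r2.
Proof. intros. split; nra. Qed.

Lemma cos_sum_bounds x y sx sy : x^2 + sx^2 = 1 -> y^2 + sy^2 = 1 ->
  -1 <= x*y - sx*sy /\ x*y + sx*sy <= 1.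
Proof.
  intros HA HB.
  assert ((x*y - sx*sy)^2 + (x*sy + sx*y)^2 = 1).
  { replace 1 with ((x^2 + sx^2)*(y^2+sy^2)) by (rewrite HA, HB; ring). ring. }
  assert ((x*y + sx*sy)^2 + (x*sy - sx*y)^2 = 1).
  { replace 1 with ((x^2 + sx^2)*(y^2+sy^2)) by (rewrite HA, HB; ring). ring. }
  pose proof (pow2_ge_0 (x*sy + sx*y)). pose proof (pow2_ge_0 (x*sy - sx*y)).
  split; nra.
Qed.

Lemma side_form_pos_between A B C D sA sD q r p : q <= p <= r ->
  0 < side_form A B C D sA sD q -> 0 < side_form A B C D sA sD r -> 0 < side_form A B C D sA sD p.
Proof.
  intros Hp H1 H2. unfold side_form in *.
  destruct (Rle_or_lt 0 (sD * A + sA * D)); nra.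
Qed.

Section Diagonal.
Variables a b c d : R.
Local Notation A := (cos (PI * a)).
Local Notation B := (cos (PI * b)).
Local Notation C := (cos (PI * c)).
Local Notation D := (cos (PI * d)).
Local Notation sA := (sin (PI * a)).
Local Notation sB := (sin (PI * b)).
Local Notation sC := (sin (PI * c)).
Local Notation sD := (sin (PI * d)).

(* Admissibility in terms of the diagonal [p = n1.n3]: the Gram determinants are the squares of
   [det3 n1 n2 n3] and [det3 n1 n3 n4], and the side forms carry the signs of [det3 n1 n2 n4] and
   [det3 n2 n3 n4] relative to [det3 n1 n2 n3]. *)
Definition diag_ok (p : R) : Prop :=
  0 < gram A B p /\ 0 < gram C D p /\ 0 < side_form A B C D sA sD p /\
  0 < side_form B A D C sB sC p /\ 0 < 1 - p^2.

Section Admissible.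
Variables n1 n2 n3 n4 : vec3.
Hypothesis Hadm : admissible n1 n2 n3 n4 a b c d.
Local Notation sg := (sign_of (det3 n1 n2 n3)).
Local Notation p0 := (dot n1 n3).

Lemma admissible_sign_of :
  (sg = 1 \/ sg = -1) /\ 0 < sg * det3 n1 n2 n3 /\ 0 < sg * det3 n1 n2 n4 /\
  0 < sg * det3 n1 n3 n4 /\ 0 < sg * det3 n2 n3 n4.
Proof.
  destruct Hadm as [_ _ _ _ _ _ _ _ _ _ _ _ Z1 Z2 Z3].
  destruct (sign_of_spec _ _ Z1) as [Sg [S123 S124]].
  destruct (sign_of_spec _ _ Z2) as [_ [_ S134]].
  destruct (sign_of_spec _ _ Z3) as [_ [_ S234]].
  auto.
Qed.

Lemma admissible_frame_hyp : frame_hyp n1 n2 A sA sg.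
Proof.
  destruct Hadm as [U1 U2 _ _ Ha _ _ _ E12 _ _ _ _ _ _].
  destruct (sin_cos_PI_mul a Ha). destruct admissible_sign_of.
  constructor; auto.
Qed.

Lemma admissible_sqrt_gram :
  sqrt (gram A B p0) = sg * det3 n1 n2 n3 /\ sqrt (gram C D p0) = sg * det3 n1 n3 n4.
Proof.
  destruct Hadm as [U1 U2 U3 U4 _ _ _ _ E12 E23 E34 E41 _ _ _].
  destruct admissible_sign_of as [Sg [S123 [_ [S134 _]]]].
  split.
  - rewrite <- (sqrt_sqr_signed sg (det3 n1 n2 n3)), det3_sqr_gram, U1, U2, U3, E12, E23 by auto.
    unfold gram. f_equal. ring.
  - rewrite <- (sqrt_sqr_signed sg (det3 n1 n3 n4)), det3_sqr_gram, U1, U3, U4, E34,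
      (dot_sym n1 n4), E41 by auto.
    unfold gram. f_equal. ring.
Qed.

Lemma admissible_gram_pos : 0 < gram A B p0 /\ 0 < gram C D p0.
Proof.
  destruct admissible_sign_of as [Sg [S123 [_ [S134 _]]]].
  destruct admissible_sqrt_gram as [G1 G2].
  split; apply Rnot_le_lt; intro Hle; [rewrite sqrt_neg_0 in G1 | rewrite sqrt_neg_0 in G2];
    auto; lra.
Qed.

Lemma admissible_diag_ok : diag_ok p0.
Proof.
  pose proof Hadm as [U1 U2 U3 U4 Ha Hb Hc Hd E12 E23 E34 E41 _ _ _].
  destruct admissible_sign_of as [Sg [S123 [S124 [S134 S234]]]].
  destruct admissible_sqrt_gram as [Y1 Y2]. destruct admissible_gram_pos as [G1 G2].
  destruct (sin_cos_PI_mul a Ha) as [sA0 HA]. destruct (sin_cos_PI_mul b Hb) as [sB0 HB].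
  destruct (sin_cos_PI_mul c Hc) as [sC0 HC]. destruct (sin_cos_PI_mul d Hd) as [sD0 HD].
  assert (HK : 0 < 1 - p0^2).
  { pose proof (gram_pythagoras A B p0) as P. pose proof (pow2_ge_0 (A * p0 - B)).
    replace (1 - A^2) with (sA^2) in P by lra.
    assert (0 < sA^2) by (apply pow_lt; auto). nra. }
  destruct (det3_relations n1 n2 n3 n4 A B C D p0 U1 U3 E12 E23 E34 E41 eq_refl) as [F1 F2].
  assert (Y1p : 0 < sqrt (gram A B p0)) by (apply sqrt_lt_R0; auto).
  assert (Y2p : 0 < sqrt (gram C D p0)) by (apply sqrt_lt_R0; auto).
  repeat split; auto.
  - apply (side_form_pos_iff (1 - p0^2) sA sD _ _ (sqrt (gram A B p0)) (sqrt (gram C D p0)));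
      auto; try (apply gram_pythagoras_sqrt; lra).
    + rewrite gram_sym. apply gram_pythagoras_sqrt; [lra | rewrite gram_sym; lra].
    + rewrite Y1, Y2.
      replace ((p0 * A - B) * (sg * det3 n1 n3 n4) + (p0 * D - C) * (sg * det3 n1 n2 n3))
        with ((1 - p0^2) * (sg * det3 n1 n2 n4)) by (rewrite <- Rmult_assoc, (Rmult_comm _ sg),
          Rmult_assoc, F1; ring).
      apply Rmult_lt_0_compat; auto.
  - apply (side_form_pos_iff (1 - p0^2) sB sC _ _ (sqrt (gram A B p0)) (sqrt (gram C D p0)));
      auto; try (apply gram_pythagoras_sqrt; lra).
    + rewrite gram_sym. apply gram_pythagoras_sqrt; [lra | rewrite gram_sym; lra].
    + rewrite Y1, Y2.
      replace ((p0 * B - A) * (sg * det3 n1 n3 n4) + (p0 * C - D) * (sg * det3 n1 n2 n3))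
        with ((1 - p0^2) * (sg * det3 n2 n3 n4)) by (rewrite <- Rmult_assoc, (Rmult_comm _ sg),
          Rmult_assoc, F2; ring).
      apply Rmult_lt_0_compat; auto.
Qed.

Lemma admissible_n3_on_diag : n3 = diag_n3 n1 n2 A B sA sg p0.
Proof.
  pose proof admissible_frame_hyp as Hf.
  pose proof Hadm as [_ _ _ _ _ _ _ _ _ E23 _ _ _ _ _].
  pose proof (frame_sA_pos _ _ _ _ _ Hf) as HsA.
  destruct admissible_sqrt_gram as [Y1 _].
  destruct (frame_coords n1 n2 A sA sg Hf p0 (beta3 A B sA p0) (gamma3 A B sA p0)) as [C1 [C2 C3]].
  unfold diag_n3. apply (frame_ext n1 n2 A sA sg Hf); rewrite ?C1, ?C2, ?C3.
  - apply dot_sym.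
  - rewrite (dot_frame_e2 n1 n2 A sA sg Hf), (dot_sym n3 n2), E23, (dot_sym n3 n1).
    unfold beta3. field. lra.
  - unfold gamma3. rewrite (dot_frame_e3 n1 n2 A sA sg Hf), Y1. field. lra.
Qed.

Lemma admissible_n4_on_diag : n4 = diag_n4 n1 n2 A B C D sA sg p0.
Proof.
  pose proof admissible_frame_hyp as Hf.
  pose proof Hadm as [_ _ U3 _ _ _ _ _ _ _ E34 E41 _ _ _].
  destruct admissible_sign_of as [Sg _].
  destruct admissible_sqrt_gram as [_ Y2]. destruct admissible_diag_ok as [_ [_ [_ [_ HK]]]].
  set (e2 := frame_e2 n1 n2 A sA). set (e3 := frame_e3 n1 n2 A sA sg).
  set (y0 := dot n4 e2). set (z0 := dot n4 e3).
  assert (R4 : n4 = lincomb n1 e2 e3 (-D) y0 z0).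
  { rewrite (frame_expand n1 n2 A sA sg Hf n4) at 1. fold e2 e3. rewrite E41. reflexivity. }
  set (be := beta3 A B sA p0). set (ga := gamma3 A B sA p0).
  assert (R3 : n3 = lincomb n1 e2 e3 p0 be ga) by exact admissible_n3_on_diag.
  pose proof (dot_frame_lincomb n1 n2 A sA sg Hf) as DC. fold e2 e3 in DC.
  destruct (frame_orthonormal n1 n2 A sA sg Hf) as [_ [_ [_ [_ [_ [_ Od]]]]]]. fold e2 e3 in Od.
  assert (Ea : be * y0 + ga * z0 = p0 * D - C).
  { assert (dot n3 n4 = p0 * (-D) + be*y0 + ga*z0) by (rewrite R3 at 1; rewrite R4, DC; ring).
    lra. }
  assert (Eb : be * z0 - ga * y0 = sqrt (gram C D p0)).
  { assert (Dt : det3 n1 n3 n4 = (be*z0 - ga*y0) * sg).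
    { rewrite R3 at 1. rewrite R4 at 1.
      replace n1 with (lincomb n1 e2 e3 1 0 0) at 1 by (symmetry; apply frame_n1).
      rewrite det3_lincomb, Od. vec_coords. ring. }
    rewrite Y2, Dt. transitivity ((be*z0 - ga*y0) * (sg*sg)); [|ring].
    destruct Sg as [-> | ->]; ring. }
  assert (Hbg : be^2 + ga^2 = 1 - p0^2).
  { assert (dot n3 n3 = p0*p0 + be*be + ga*ga) by (rewrite R3 at 1 2; apply DC). nra. }
  rewrite R4. unfold diag_n4. fold e2 e3. f_equal.
  - unfold beta4. fold be ga. rewrite <- Eb, <- Ea, <- Hbg. field. lra.
  - unfold gamma4. fold be ga. rewrite <- Eb, <- Ea, <- Hbg. field. lra.
Qed.
End Admissible.

Lemma diag_admissible n1 n2 sg p : 0 < a < 1 -> 0 < b < 1 -> 0 < c < 1 -> 0 < d < 1 ->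
  frame_hyp n1 n2 A sA sg -> diag_ok p ->
  admissible n1 n2 (diag_n3 n1 n2 A B sA sg p) (diag_n4 n1 n2 A B C D sA sg p) a b c d.
Proof.
  intros Ha Hb Hc Hd Hf [Gab [Gcd [L1 [L2 HK]]]].
  destruct (sin_cos_PI_mul a Ha) as [sA0 HA]. destruct (sin_cos_PI_mul b Hb) as [sB0 HB].
  destruct (sin_cos_PI_mul c Hc) as [sC0 HC]. destruct (sin_cos_PI_mul d Hd) as [sD0 HD].
  destruct (diag_normals_spec n1 n2 A B C D sA sg p Hf) as
    [U3 [U4 [E13 [E23 [E34 [E41 [D123 D134]]]]]]]; try lra.
  set (n3 := diag_n3 n1 n2 A B sA sg p) in *. set (n4 := diag_n4 n1 n2 A B C D sA sg p) in *.
  destruct Hf as [U1 U2 E12 _ _ Hg].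
  assert (Hsg : sg * sg = 1) by (destruct Hg as [-> | ->]; ring).
  destruct (det3_relations n1 n2 n3 n4 A B C D p U1 U3 E12 E23 E34 E41 E13) as [F1 F2].
  set (Y1 := sqrt (gram A B p)) in *. set (Y2 := sqrt (gram C D p)) in *.
  assert (Y1p : 0 < Y1) by (apply sqrt_lt_R0; auto).
  assert (Y2p : 0 < Y2) by (apply sqrt_lt_R0; auto).
  assert (S1 : 0 < (p*A - B)*Y2 + (p*D - C)*Y1).
  { unfold Y1, Y2. apply (side_form_pos_iff (1 - p^2) sA sD); auto;
      try (apply gram_pythagoras_sqrt; lra).
    rewrite gram_sym. apply gram_pythagoras_sqrt; [lra | rewrite gram_sym; lra]. }
  assert (S2 : 0 < (p*B - A)*Y2 + (p*C - D)*Y1).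
  { unfold Y1, Y2. apply (side_form_pos_iff (1 - p^2) sB sC); auto;
      try (apply gram_pythagoras_sqrt; lra).
    rewrite gram_sym. apply gram_pythagoras_sqrt; [lra | rewrite gram_sym; lra]. }
  rewrite D123, D134 in F1, F2.
  constructor; auto.
  - assert (P : (1 - p^2) * (det3 n1 n2 n3 * det3 n1 n2 n4) = Y1 * ((p*A - B)*Y2 + (p*D - C)*Y1)).
    { rewrite D123. transitivity (sg * Y1 * ((1 - p^2) * det3 n1 n2 n4)); [ring|].
      rewrite F1. transitivity (sg * sg * Y1 * ((p*A - B)*Y2 + (p*D - C)*Y1)); [ring|].
      rewrite Hsg. ring. }
    assert (0 < (1 - p^2) * (det3 n1 n2 n3 * det3 n1 n2 n4)) by (rewrite P; nra). nra.
  - rewrite D123, D134. replace (sg * Y1 * (sg * Y2)) with (sg * sg * (Y1 * Y2)) by ring.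
    rewrite Hsg. nra.
  - assert (P : (1 - p^2) * (det3 n1 n2 n3 * det3 n2 n3 n4) = Y1 * ((p*B - A)*Y2 + (p*C - D)*Y1)).
    { rewrite D123. transitivity (sg * Y1 * ((1 - p^2) * det3 n2 n3 n4)); [ring|].
      rewrite F2. transitivity (sg * sg * Y1 * ((p*B - A)*Y2 + (p*C - D)*Y1)); [ring|].
      rewrite Hsg. ring. }
    assert (0 < (1 - p^2) * (det3 n1 n2 n3 * det3 n2 n3 n4)) by (rewrite P; nra). nra.
Qed.

Local Notation p_end := (A*B - sA*sB).

(* [p_end = cos (pi (a + b))] is the diagonal at which [det3 n1 n2 n3] vanishes; these
   consequences of [c + d < a + b] make the other conditions of [diag_ok] hold there. *)
Definition endpoint_ineqs : Prop :=
  sA*B + A*sB < 0 /\ C*D - sC*sD < p_end /\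
  C < p_end*D - (sA*B + A*sB)*sD /\ D < p_end*C - (sA*B + A*sB)*sC.

Lemma admissible_endpoint_ineqs n1 n2 n3 n4 : admissible n1 n2 n3 n4 a b c d -> c + d < a + b ->
  endpoint_ineqs.
Proof.
  intros Hadm Hab. pose proof Hadm as [_ _ _ _ Ha Hb Hc Hd _ _ _ _ _ _ _].
  destruct (angle_sum_trig_ineqs a b c d) as [T1 [T2 [T3 T4]]]; auto.
  - eapply admissible_angle_sum_gt2; eauto.
  - eapply admissible_angle_sum_lt2; eauto.
  - eapply admissible_angle_sum_lt2'; eauto.
  - rewrite sin_plus in T1. rewrite !cos_plus in T2. rewrite !cos_plus, sin_plus in T3, T4.
    repeat split; lra.
Qed.

Section Interval.
Hypotheses (Ha : 0 < a < 1) (Hb : 0 < b < 1) (Hc : 0 < c < 1) (Hd : 0 < d < 1).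
Variable p0 : R.
Hypothesis Hp0 : diag_ok p0.
Hypothesis Hend : endpoint_ineqs.

Lemma p_end_lt : p_end < p0 < A*B + sA*sB.
Proof.
  destruct (sin_cos_PI_mul a Ha) as [sA0 HA]. destruct (sin_cos_PI_mul b Hb) as [sB0 HB].
  destruct Hp0 as [G _]. rewrite (gram_factor A B sA sB p0 HA HB) in G.
  apply root_between; auto. nra.
Qed.

Lemma diag_closed_interval p : p_end <= p <= p0 ->
  0 <= gram A B p /\ 0 < gram C D p /\ 0 < 1 - p^2.
Proof.
  intros Hp. pose proof p_end_lt as Hlt.
  destruct (sin_cos_PI_mul a Ha) as [sA0 HA]. destruct (sin_cos_PI_mul b Hb) as [sB0 HB].
  destruct (sin_cos_PI_mul c Hc) as [sC0 HC]. destruct (sin_cos_PI_mul d Hd) as [sD0 HD].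
  destruct Hp0 as [_ [G2 _]]. destruct Hend as [_ [K2 _]].
  rewrite (gram_factor C D sC sD p0 HC HD) in G2.
  assert (0 < sC * sD) by nra.
  apply root_between in G2; [|lra].
  destruct (cos_sum_bounds A B sA sB HA HB). destruct (cos_sum_bounds C D sC sD HC HD).
  rewrite (gram_factor A B sA sB p HA HB), (gram_factor C D sC sD p HC HD).
  repeat split; nra.
Qed.

Lemma diag_ok_between p : p_end < p <= p0 -> diag_ok p.
Proof.
  intros Hp. pose proof p_end_lt as Hlt.
  destruct (sin_cos_PI_mul a Ha) as [sA0 HA]. destruct (sin_cos_PI_mul b Hb) as [sB0 HB].
  destruct (diag_closed_interval p) as [_ [G2 K]]; [lra|].
  destruct Hp0 as [_ [_ [L1 [L2 _]]]]. destruct Hend as [_ [_ [K3 K4]]].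
  repeat split; auto.
  - rewrite (gram_factor A B sA sB p HA HB). nra.
  - apply (side_form_pos_between _ _ _ _ _ _ p_end p0); auto; [lra|].
    assert (E : side_form A B C D sA sD p_end =
      sA * (p_end*D - (sA*B + A*sB)*sD - C) + sD*B*((A^2 + sA^2) - 1)) by (unfold side_form; ring).
    rewrite E, HA, Rminus_diag, Rmult_0_r, Rplus_0_r. apply Rmult_lt_0_compat; lra.
  - apply (side_form_pos_between _ _ _ _ _ _ p_end p0); auto; [lra|].
    assert (E : side_form B A D C sB sC p_end =
      sB * (p_end*C - (sA*B + A*sB)*sC - D) + sC*A*((B^2 + sB^2) - 1)) by (unfold side_form; ring).
    rewrite E, HB, Rminus_diag, Rmult_0_r, Rplus_0_r. apply Rmult_lt_0_compat; lra.
Qed.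
End Interval.
End Diagonal.

Lemma wedge_x1_bound A B sA p be ga x1 x2 x3 :
  0 < sA -> A^2 + sA^2 = 1 -> be*sA = A*p - B -> 0 < be -> 0 <= ga -> x3 <= 1 ->
  -A*x1 + sA*x2 < 0 -> 0 < p*x1 + be*x2 + ga*x3 -> x1 * (A*B - p) < ga * sA^2.
Proof.
  intros HsA HA Hbe Hbe0 Hga Hx3 H2 H3.
  assert (ga*x3 <= ga) by nra.
  assert (S1 : sA*(-p*x1 - ga) < sA*(be*x2)) by (apply Rmult_lt_compat_l; lra).
  assert (S2 : be*(sA*x2) < be*(A*x1)) by (apply Rmult_lt_compat_l; lra).
  assert (S3 : sA*(sA*(-p*x1 - ga)) < sA*(be*(A*x1))).
  { apply Rmult_lt_compat_l; auto. replace (be*(sA*x2)) with (sA*(be*x2)) in S2 by ring. lra. }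
  replace (sA*(be*(A*x1))) with ((be*sA)*(A*x1)) in S3 by ring. rewrite Hbe in S3.
  assert (E : p*x1*(A^2+sA^2) = p*x1) by (rewrite HA; ring).
  lra.
Qed.

(* Frame coordinates of a point of the triangle across C2 when [n3] is nearly in the plane of
   [n1, n2] ([ga] small): the triangle lies within [M = O(ga)] of [e3]. *)
Lemma wedge_coords A B sA p be ga D y z x1 x2 x3 M :
  0 < sA -> A^2 + sA^2 = 1 -> be*sA = A*p - B -> 0 < A*B - p -> 0 < be -> 0 <= ga ->
  -1 <= p <= 1 -> D^2 <= 1 -> y^2 <= 1 ->
  M = ga*sA^2/(A*B - p) * (1 + /sA + /be) + ga/be -> M <= 1/4 -> 4*M <= z ->
  x1^2 + x2^2 + x3^2 = 1 -> 0 < x1 -> -A*x1 + sA*x2 < 0 -> 0 < p*x1 + be*x2 + ga*x3 ->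
  0 < -D*x1 + y*x2 + z*x3 ->
  x1 <= M /\ -M <= x2 <= M /\ 1 - x3 <= 2*M^2.
Proof.
  intros HsA HA Hbe Hk Hbe0 Hga Hp HD Hy HM HM1 HM2 Hx Hx1 H2 H3 H4.
  assert (Hx3l : -1 <= x3) by nra. assert (Hx3u : x3 <= 1) by nra.
  set (X := ga*sA^2/(A*B - p)).
  assert (HX0 : 0 <= X).
  { unfold X, Rdiv. apply Rmult_le_pos; [nra | left; apply Rinv_0_lt_compat; auto]. }
  assert (HisA : 0 < / sA) by (apply Rinv_0_lt_compat; auto).
  assert (Hibe : 0 < / be) by (apply Rinv_0_lt_compat; auto).
  assert (HMX : M = X + X * / sA + X * / be + ga * / be) by (rewrite HM; unfold X, Rdiv; ring).
  assert (Hx1X : x1 <= X).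
  { pose proof (wedge_x1_bound A B sA p be ga x1 x2 x3 HsA HA Hbe Hbe0 Hga Hx3u H2 H3).
    unfold X. apply (Rmult_le_reg_r (A*B - p)); auto.
    replace (ga * sA ^ 2 / (A * B - p) * (A * B - p)) with (ga * sA^2) by (field; lra). lra. }
  assert (Hx2u : x2 <= X * / sA).
  { apply (Rmult_le_reg_l sA); auto. replace (sA * (X * / sA)) with X by (field; lra). nra. }
  assert (Hx2l : - (X * / be + ga * / be) <= x2).
  { apply (Rmult_le_reg_l be); auto.
    replace (be * - (X * / be + ga * / be)) with (- (X + ga)) by (field; lra).
    assert (ga*x3 <= ga) by nra. assert (p*x1 <= x1) by nra. lra. }
  assert (B1 : x1 <= M) by nra.
  assert (B2 : -M <= x2 <= M) by (split; nra).
  assert (Hsq : x1^2 + x2^2 <= 2*M^2) by nra.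
  assert (Hx3pos : 0 < x3).
  { apply Rnot_le_lt. intro Hneg. assert (x3 < - (1/2)) by nra.
    assert (-1 <= D <= 1) by nra. assert (-1 <= y <= 1) by nra.
    assert (- D * x1 <= M) by nra. assert (y * x2 <= M) by nra.
    assert (z * x3 < z * (- (1/2))) by (apply Rmult_lt_compat_l; lra). lra. }
  split; [exact B1 | split; [exact B2 | nra]].
Qed.

Lemma exists_pos_le5 a1 a2 a3 a4 a5 : 0 < a1 -> 0 < a2 -> 0 < a3 -> 0 < a4 -> 0 < a5 ->
  exists e, 0 < e /\ e <= a1 /\ e <= a2 /\ e <= a3 /\ e <= a4 /\ e <= a5.
Proof.
  intros. exists (Rmin a1 (Rmin a2 (Rmin a3 (Rmin a4 a5)))).
  unfold Rmin. repeat destruct Rle_dec; repeat split; lra.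
Qed.

Definition quad (n1 n2 n3 n4 : vec3) : config :=
  fun i => match i with I1 => n1 | I2 => n2 | I3 => n3 | I4 => n4 end.

Definition lerp (p0 p1 t : R) : R := p0 + t * (p1 - p0).

Definition diag_path (n1 n2 : vec3) (A B C D sA sg p0 p1 t : R) : config :=
  quad n1 n2 (diag_n3 n1 n2 A B sA sg (lerp p0 p1 t)) (diag_n4 n1 n2 A B C D sA sg (lerp p0 p1 t)).

Lemma continuity_pt_eps f t : continuity_pt f t -> forall eps, 0 < eps ->
  exists del, 0 < del /\ forall s, Rabs (s - t) < del -> Rabs (f s - f t) < eps.
Proof.
  intros H eps Heps. unfold continuity_pt, continue_in, limit1_in, limit_in in H.
  destruct (H eps Heps) as [del [Hd Hs]]. exists del. split; auto.
  intros s Hst. destruct (Req_dec s t) as [->|Hne].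
  - rewrite Rminus_diag, Rabs_R0. auto.
  - apply Hs. unfold D_x, no_cond. split; [split; auto | exact Hst].
Qed.

Lemma norm_frame_diff_lt n1 n2 A sA sg x y z x' y' z' eps : frame_hyp n1 n2 A sA sg -> 0 < eps ->
  (x - x')^2 + (y - y')^2 + (z - z')^2 < eps^2 ->
  let e2 := frame_e2 n1 n2 A sA in let e3 := frame_e3 n1 n2 A sA sg in
  norm (vsub (lincomb n1 e2 e3 x y z) (lincomb n1 e2 e3 x' y' z')) < eps.
Proof.
  intros Hf He H e2 e3.
  replace (vsub (lincomb n1 e2 e3 x y z) (lincomb n1 e2 e3 x' y' z'))
    with (lincomb n1 e2 e3 (x-x') (y-y') (z-z')) by vec_ring.
  unfold norm. rewrite (dot_frame_lincomb n1 n2 A sA sg Hf).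
  rewrite <- (sqrt_pow2 eps) by lra. apply sqrt_lt_1_alt.
  replace ((x - x') * (x - x') + (y - y') * (y - y') + (z - z') * (z - z'))
    with ((x - x')^2 + (y - y')^2 + (z - z')^2) by ring.
  pose proof (pow2_ge_0 (x - x')). pose proof (pow2_ge_0 (y - y')). pose proof (pow2_ge_0 (z - z')).
  split; lra.
Qed.

Lemma frame_path_cont n1 n2 A sA sg fx fy fz t : frame_hyp n1 n2 A sA sg ->
  continuity_pt fx t -> continuity_pt fy t -> continuity_pt fz t ->
  forall eps, 0 < eps -> exists del, 0 < del /\ forall s, Rabs (s - t) < del ->
  let e2 := frame_e2 n1 n2 A sA in let e3 := frame_e3 n1 n2 A sA sg in
  norm (vsub (lincomb n1 e2 e3 (fx s) (fy s) (fz s)) (lincomb n1 e2 e3 (fx t) (fy t) (fz t))) < eps.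
Proof.
  intros Hf Cx Cy Cz eps He.
  destruct (continuity_pt_eps fx t Cx (eps/2)) as [d1 [H1 P1]]; [lra|].
  destruct (continuity_pt_eps fy t Cy (eps/2)) as [d2 [H2 P2]]; [lra|].
  destruct (continuity_pt_eps fz t Cz (eps/2)) as [d3 [H3 P3]]; [lra|].
  exists (Rmin d1 (Rmin d2 d3)). split; [repeat apply Rmin_pos; auto|].
  intros s Hs e2 e3. apply norm_frame_diff_lt; auto.
  assert (Hsq : forall u, Rabs u < eps/2 -> u^2 < eps^2/4).
  { intros u Hu. rewrite <- pow2_abs. pose proof (Rabs_pos u). nra. }
  pose proof (Rmin_l d1 (Rmin d2 d3)). pose proof (Rmin_r d1 (Rmin d2 d3)).
  pose proof (Rmin_l d2 d3). pose proof (Rmin_r d2 d3).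
  pose proof (Hsq _ (P1 s ltac:(lra))). pose proof (Hsq _ (P2 s ltac:(lra))).
  pose proof (Hsq _ (P3 s ltac:(lra))). nra.
Qed.

Lemma norm_vsub_self u : norm (vsub u u) = 0.
Proof.
  unfold norm. replace (dot (vsub u u) (vsub u u)) with 0 by (vec_coords; ring). apply sqrt_0.
Qed.

Lemma diag_path_cont n1 n2 A B C D sA sg p0 p1 : frame_hyp n1 n2 A sA sg ->
  (forall t, closed01 t -> 0 <= gram A B (lerp p0 p1 t) /\ 0 <= gram C D (lerp p0 p1 t) /\
     0 < 1 - (lerp p0 p1 t)^2) ->
  path_cont_on closed01 (diag_path n1 n2 A B C D sA sg p0 p1).
Proof.
  intros Hf Hint i t Ht eps Heps.
  destruct (Hint t Ht) as [G1 [G2 K]]. unfold gram, lerp in G1, G2, K.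
  pose proof (frame_sA_pos _ _ _ _ _ Hf).
  destruct i; unfold diag_path, quad.
  - exists 1. split; [lra|]. intros. rewrite norm_vsub_self. auto.
  - exists 1. split; [lra|]. intros. rewrite norm_vsub_self. auto.
  - destruct (frame_path_cont n1 n2 A sA sg (lerp p0 p1) (fun t => beta3 A B sA (lerp p0 p1 t))
      (fun t => gamma3 A B sA (lerp p0 p1 t)) t Hf) with (eps := eps) as [del [Hdel P]]; auto.
    + unfold lerp. reg.
    + unfold beta3, lerp. reg.
    + unfold gamma3, gram, lerp. reg; lra.
    + exists del. split; auto. intros s _ Hst. apply (P s Hst).
  - destruct (frame_path_cont n1 n2 A sA sg (fun _ => -D) (fun t => beta4 A B C D sA (lerp p0 p1 t))
      (fun t => gamma4 A B C D sA (lerp p0 p1 t)) t Hf) with (eps := eps) as [del [Hdel P]]; auto.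
    + reg.
    + unfold beta4, beta3, gamma3, gram, lerp. reg; lra.
    + unfold gamma4, beta3, gamma3, gram, lerp. reg; lra.
    + exists del. split; auto. intros s _ Hst. apply (P s Hst).
Qed.

Definition wedge_radius (A B sA p : R) : R :=
  gamma3 A B sA p * sA^2 / (A*B - p) * (1 + / sA + / beta3 A B sA p) +
  gamma3 A B sA p / beta3 A B sA p.

Lemma diag_adj_face2_coords n1 n2 A B C D sA sg p x : frame_hyp n1 n2 A sA sg ->
  0 <= gram A B p -> 0 <= gram C D p -> 0 < 1 - p^2 ->
  adj_face (quad n1 n2 (diag_n3 n1 n2 A B sA sg p) (diag_n4 n1 n2 A B C D sA sg p)) I2 x ->
  let x1 := dot x n1 in let x2 := dot x (frame_e2 n1 n2 A sA) in
  let x3 := dot x (frame_e3 n1 n2 A sA sg) in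
  x1^2 + x2^2 + x3^2 = 1 /\ 0 < x1 /\ -A*x1 + sA*x2 < 0 /\
  0 < p*x1 + beta3 A B sA p * x2 + gamma3 A B sA p * x3 /\
  0 < -D*x1 + beta4 A B C D sA p * x2 + gamma4 A B C D sA p * x3.
Proof.
  intros Hf Gab Gcd K [Sx [X2 Xk]] x1 x2 x3.
  pose proof (frame_expand n1 n2 A sA sg Hf x) as Ex. fold x1 x2 x3 in Ex.
  pose proof (dot_frame_lincomb n1 n2 A sA sg Hf) as DC.
  assert (X1 := Xk I1 ltac:(discriminate)). assert (X3 := Xk I3 ltac:(discriminate)).
  assert (X4 := Xk I4 ltac:(discriminate)). simpl in X1, X2, X3, X4.
  unfold diag_n3 in X3. unfold diag_n4 in X4. rewrite (frame_n2 n1 n2 A sA sg Hf) in X2.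
  rewrite Ex, DC in X2, X3, X4. unfold on_sphere in Sx. rewrite Ex, DC in Sx.
  rewrite dot_sym in X1. fold x1 in X1.
  repeat split; nra.
Qed.

Section Contraction.
Variables (n1 n2 : vec3) (A B C D sA sB sg p0 : R).
Hypotheses (Hf : frame_hyp n1 n2 A sA sg) (HB : B^2 + sB^2 = 1) (HsB : 0 < sB) (HD : D^2 <= 1).
Local Notation p_end := (A*B - sA*sB).
Hypotheses (Hlt : p_end < p0) (Hsin : sA*B + A*sB < 0) (Gend : 0 < gram C D p_end).
Hypothesis Hint : forall p, p_end <= p <= p0 ->
  0 <= gram A B p /\ 0 <= gram C D p /\ 0 < 1 - p^2.

Lemma diag_end_values :
  gamma3 A B sA p_end = 0 /\ beta3 A B sA p_end = - (sA*B + A*sB) /\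
  0 < gamma4 A B C D sA p_end /\ wedge_radius A B sA p_end = 0.
Proof.
  destruct Hf as [_ _ _ HA HsA _].
  destruct (Hint p_end) as [_ [_ K]]; [lra|].
  assert (G0 : gram A B p_end = 0) by (rewrite (gram_factor A B sA sB p_end HA HB); ring).
  assert (Hg : gamma3 A B sA p_end = 0) by (unfold gamma3; rewrite G0, sqrt_0; field; lra).
  assert (Hb : beta3 A B sA p_end = - (sA*B + A*sB)).
  { unfold beta3. replace (A * (A*B - sA*sB) - B) with (- (sA*B + A*sB) * sA + B*(A^2 + sA^2 - 1))
      by ring. rewrite HA. field. lra. }
  repeat split; auto.
  - unfold gamma4. rewrite Hg, Hb. apply Rdiv_lt_0_compat; [|lra].
    pose proof (sqrt_lt_R0 _ Gend). nra.
  - unfold wedge_radius. rewrite Hg. unfold Rdiv. ring.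
Qed.

Lemma diag_adj_face2_diam p x y :
  p_end <= p <= p0 -> 0 < A*B - p -> 0 < beta3 A B sA p ->
  wedge_radius A B sA p <= 1/4 -> 4 * wedge_radius A B sA p <= gamma4 A B C D sA p ->
  adj_face (quad n1 n2 (diag_n3 n1 n2 A B sA sg p) (diag_n4 n1 n2 A B C D sA sg p)) I2 x ->
  adj_face (quad n1 n2 (diag_n3 n1 n2 A B sA sg p) (diag_n4 n1 n2 A B C D sA sg p)) I2 y ->
  norm (vsub x y) < 3 * wedge_radius A B sA p.
Proof.
  intros Hp Hk Hbe HM1 HM2 Hx Hy.
  destruct (Hint p Hp) as [Gab [Gcd K]].
  pose proof Hf as [_ _ _ HA HsA _].
  destruct (diag_normals_spec n1 n2 A B C D sA sg p Hf Gab Gcd K) as [_ [U4 _]].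
  unfold diag_n4 in U4. rewrite (dot_frame_lincomb n1 n2 A sA sg Hf) in U4.
  set (M := wedge_radius A B sA p) in *.
  assert (Hga : 0 <= gamma3 A B sA p).
  { unfold gamma3. apply Rmult_le_pos; [apply sqrt_pos | left; apply Rinv_0_lt_compat; lra]. }
  assert (Bounds : forall v, adj_face (quad n1 n2 (diag_n3 n1 n2 A B sA sg p)
      (diag_n4 n1 n2 A B C D sA sg p)) I2 v ->
    0 < dot v n1 <= M /\ - M <= dot v (frame_e2 n1 n2 A sA) <= M /\
    1 - dot v (frame_e3 n1 n2 A sA sg) <= 2 * M^2 /\ dot v (frame_e3 n1 n2 A sA sg) <= 1).
  { intros v Hv.
    destruct (diag_adj_face2_coords n1 n2 A B C D sA sg p v Hf Gab Gcd K Hv)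
      as [S [V1 [V2 [V3 V4]]]].
    destruct (wedge_coords A B sA p (beta3 A B sA p) (gamma3 A B sA p) D (beta4 A B C D sA p)
      (gamma4 A B C D sA p) (dot v n1) (dot v (frame_e2 n1 n2 A sA))
      (dot v (frame_e3 n1 n2 A sA sg)) M)
      as [W1 [W2 W3]]; auto; try nra.
    unfold beta3. field. lra. }
  destruct (Bounds x Hx) as [X1 [X2 [X3 X3']]]. destruct (Bounds y Hy) as [Y1 [Y2 [Y3 Y3']]].
  rewrite (frame_expand n1 n2 A sA sg Hf x), (frame_expand n1 n2 A sA sg Hf y).
  apply norm_frame_diff_lt; auto; [lra|].
  assert (M^2 <= M / 4) by nra. nra.
Qed.

Lemma diag_end_limits eta : 0 < eta -> exists del, 0 < del /\ forall t, 1 - del < t < 1 ->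
  let p := lerp p0 p_end t in
  p_end < p <= p0 /\ 0 < A*B - p /\ 0 < beta3 A B sA p /\
  gamma4 A B C D sA p_end / 2 < gamma4 A B C D sA p /\ wedge_radius A B sA p < eta.
Proof.
  intros Heta.
  destruct diag_end_values as [G0 [B0 [Z0 M0]]].
  pose proof Hf as [_ _ _ HA HsA _].
  assert (HsAB : 0 < sA * sB) by nra.
  assert (L1 : lerp p0 p_end 1 = p_end) by (unfold lerp; ring).
  destruct (Hint p_end) as [Gab1 [Gcd1 K1]]; [lra|].
  rewrite <- L1 in G0, B0, Z0, M0, Gab1, Gcd1, K1 at 1. unfold lerp, gram in Gab1, Gcd1, K1.
  assert (Hk1 : A * B - lerp p0 p_end 1 <> 0) by (rewrite L1; lra).
  assert (Hb1 : beta3 A B sA (lerp p0 p_end 1) <> 0) by lra.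
  unfold lerp, beta3 in Hk1, Hb1.
  destruct (continuity_pt_eps (fun t => wedge_radius A B sA (lerp p0 p_end t)) 1) with (eps := eta)
    as [dM [HdM PM]]; auto.
  { unfold wedge_radius, gamma3, beta3, gram, lerp. reg; lra. }
  destruct (continuity_pt_eps (fun t => gamma4 A B C D sA (lerp p0 p_end t)) 1)
    with (eps := gamma4 A B C D sA p_end / 2) as [dz [Hdz Pz]]; [|rewrite <- L1; lra|].
  { unfold gamma4, gamma3, beta3, gram, lerp. reg; lra. }
  destruct (continuity_pt_eps (fun t => beta3 A B sA (lerp p0 p_end t)) 1)
    with (eps := - (sA*B + A*sB) / 2) as [db [Hdb Pb]]; [|lra|].
  { unfold beta3, lerp. reg. }
  destruct (exists_pos_le5 dM dz db 1 (sA*sB/(p0 - p_end))) as [del [Hdel [D1 [D2 [D3 [D4 D5]]]]]];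
    auto; try lra.
  { apply Rdiv_lt_0_compat; lra. }
  exists del. split; auto. intros t Ht p.
  assert (Ht1 : Rabs (t - 1) < del) by (rewrite Rabs_left by lra; lra).
  specialize (PM t ltac:(lra)). specialize (Pz t ltac:(lra)). specialize (Pb t ltac:(lra)).
  rewrite M0, Rminus_0_r in PM. rewrite L1 in Pz. rewrite B0 in Pb.
  fold p in PM, Pz, Pb.
  apply Rabs_def2 in PM. apply Rabs_def2 in Pz. apply Rabs_def2 in Pb.
  assert (Hp : p - p_end = (1 - t) * (p0 - p_end)) by (unfold p, lerp; ring).
  assert (Hp' : (1 - t) * (p0 - p_end) < sA * sB).
  { assert (E : sA*sB/(p0 - p_end) * (p0 - p_end) = sA*sB) by (field; lra).
    assert (del * (p0 - p_end) <= sA*sB/(p0 - p_end) * (p0 - p_end))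
      by (apply Rmult_le_compat_r; lra).
    assert ((1 - t) * (p0 - p_end) < del * (p0 - p_end)) by (apply Rmult_lt_compat_r; lra).
    lra. }
  repeat split; try lra; nra.
Qed.

Lemma diag_path_contracts :
  contracts_to_point (fun t => adj_face (diag_path n1 n2 A B C D sA sg p0 p_end t) I2).
Proof.
  intros eps Heps.
  destruct diag_end_values as [_ [_ [Z0 _]]].
  destruct (exists_pos_le5 (1/4) (gamma4 A B C D sA p_end / 8) (eps/3) 1 1)
    as [eta [Heta [E1 [E2 [E3 _]]]]]; try lra.
  destruct (diag_end_limits eta Heta) as [del [Hdel Hlim]].
  exists del. split; auto. intros t Ht x y Hx Hy.
  destruct (Hlim t Ht) as [Hp [Hk [Hbe [Hz HM]]]].
  eapply Rlt_le_trans; [apply (diag_adj_face2_diam (lerp p0 p_end t) x y); auto; lra | lra].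
Qed.
End Contraction.

Lemma perturb_unit v m eta : dot v v = 1 -> dot v m = 0 -> dot m m <= 4 -> 0 < eta ->
  let u := vadd v (vscale eta m) in
  0 < norm u /\ on_sphere (vscale (/ norm u) u) /\ norm (vsub (vscale (/ norm u) u) v) <= 2 * eta /\
  forall w, dot w (vscale (/ norm u) u) = (dot w v + eta * dot w m) / norm u.
Proof.
  intros Hv Hm Hmm He u.
  assert (Eu : dot u u = 1 + eta^2 * dot m m).
  { unfold u. transitivity (dot v v + 2*eta*dot v m + eta^2 * dot m m); [vec_coords; ring|].
    rewrite Hv, Hm. ring. }
  assert (Huu : 1 <= dot u u) by (rewrite Eu; pose proof (dot_self_ge0 m); nra).
  destruct (normalize_unit u ltac:(lra)) as [Hunit Hdot].
  pose proof (norm_sqr u) as Hn2.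
  assert (Hn1 : 1 <= norm u) by (unfold norm; rewrite <- sqrt_1; apply sqrt_le_1_alt; lra).
  split; [lra|]. split; [exact Hunit|]. split.
  - assert (Euv : dot v u = 1) by (unfold u; rewrite dot_sym; vec_coords; nra).
    assert (E : dot (vsub (vscale (/ norm u) u) v) (vsub (vscale (/ norm u) u) v) = 2 - 2 / norm u).
    { transitivity (dot (vscale (/ norm u) u) (vscale (/ norm u) u)
        - 2 * dot v (vscale (/ norm u) u) + dot v v); [vec_coords; ring|].
      rewrite Hunit, Hdot, Euv, Hv. field. lra. }
    unfold norm at 1. rewrite E, <- (sqrt_pow2 (2*eta)) by lra. apply sqrt_le_1_alt.
    assert (2 - 2 / norm u <= norm u * norm u - 1).
    { apply (Rmult_le_reg_r (norm u)); [lra|].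
      replace ((2 - 2 / norm u) * norm u) with (2 * norm u - 2) by (field; lra). nra. }
    assert (eta^2 * dot m m <= eta^2 * 4) by (apply Rmult_le_compat_l; [apply pow2_ge_0|auto]).
    lra.
  - intro w. rewrite Hdot. f_equal. unfold u. vec_coords. ring.
Qed.

Lemma idx_eq_dec (i j : idx) : {i = j} + {i <> j}.
Proof. decide equality. Qed.

(* Pushing a vertex of F on C4 slightly across C4 along [n_i - n4] lands in the triangle
   adjacent to F across C4. *)
Lemma adj_face4_near_vertex c i v eta : unit_normals c -> i <> I4 ->
  dot v v = 1 -> dot v (c i) = 0 -> dot v (c I4) = 0 -> (dot (c i) (c I4))^2 < 1 -> 0 < eta ->
  (forall k, k <> i -> k <> I4 -> 4 * eta <= dot (c k) v) ->
  exists x, adj_face c I4 x /\ norm (vsub x v) <= 2 * eta.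
Proof.
  intros Hu Hi Hv Vi V4 H4 He Hk.
  set (m := vsub (c i) (c I4)).
  assert (Dm : forall w, dot w m = dot w (c i) - dot w (c I4))
    by (intro w; unfold m; vec_coords; ring).
  assert (Bd := unit_dot_bound (c i) (c I4) (Hu i) (Hu I4)).
  assert (Mv : dot v m = 0) by (rewrite Dm, Vi, V4; ring).
  assert (Mm : dot m m <= 4).
  { replace (dot m m) with (dot (c i) (c i) - 2 * dot (c i) (c I4) + dot (c I4) (c I4))
      by (unfold m; vec_coords; ring). rewrite (Hu i), (Hu I4). lra. }
  destruct (perturb_unit v m eta Hv Mv Mm He) as [Nu [Sx [Dx Wx]]].
  eexists. split; [|exact Dx]. split; [exact Sx|]. split.
  - rewrite Wx, Dm, (dot_sym (c I4) v), V4, (Hu I4), (dot_sym (c I4) (c i)).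
    assert (0 < / norm (vadd v (vscale eta m))) by (apply Rinv_0_lt_compat; auto).
    assert (dot (c i) (c I4) < 1) by nra. assert (eta * (dot (c i) (c I4) - 1) < 0) by nra.
    unfold Rdiv. nra.
  - intros k Hki. rewrite Wx, Dm. apply Rdiv_lt_0_compat; auto.
    destruct (idx_eq_dec k i) as [-> | Hki'].
    + rewrite (dot_sym (c i) v), Vi, (Hu i). nra.
    + pose proof (Hk k Hki' Hki). pose proof (unit_dot_bound (c k) (c i) (Hu k) (Hu i)).
      pose proof (unit_dot_bound (c k) (c I4) (Hu k) (Hu I4)). nra.
Qed.

Lemma perp_unit_dot_cross_sqr u w v : dot v v = 1 -> dot v u = 0 -> dot v w = 0 ->
  (dot v (cross u w))^2 = dot (cross u w) (cross u w).
Proof.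
  intros Hv Hu Hw. pose proof (perp_parallel_cross u w v Hu Hw) as P.
  transitivity (dot v (vscale (dot v (cross u w)) (cross u w))); [rewrite dot_scale_r; ring|].
  rewrite <- P, dot_scale_r, Hv. ring.
Qed.

Lemma vertex34_dot_vertex41 n1 n3 n4 v3 v4 C D sC sD p :
  dot n1 n1 = 1 -> dot n3 n3 = 1 -> dot n4 n4 = 1 ->
  dot n3 n4 = - C -> dot n4 n1 = - D -> dot n1 n3 = p ->
  C^2 + sC^2 = 1 -> D^2 + sD^2 = 1 -> 0 < sC -> 0 < sD ->
  dot v3 v3 = 1 -> dot v3 n3 = 0 -> dot v3 n4 = 0 -> 0 < dot n1 v3 ->
  dot v4 v4 = 1 -> dot v4 n4 = 0 -> dot v4 n1 = 0 -> 0 < dot n3 v4 ->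
  dot v3 v4 = (C*D - p) / (sC * sD).
Proof.
  intros U1 U3 U4 E34 E41 E13 HC HD sC0 sD0 S3 P33 P34 Q31 S4 P44 P41 Q43.
  set (X := cross n3 n4). set (Y := cross n4 n1).
  assert (HX : dot X X = sC^2) by (unfold X; rewrite cross_unit_dot_self, E34 by auto; nra).
  assert (HY : dot Y Y = sD^2) by (unfold Y; rewrite cross_unit_dot_self, E41 by auto; nra).
  pose proof (perp_parallel_cross n3 n4 v3 P33 P34) as PX. fold X in PX. rewrite HX in PX.
  pose proof (perp_parallel_cross n4 n1 v4 P44 P41) as PY. fold Y in PY. rewrite HY in PY.
  assert (XY : dot X Y = C*D - p).
  { unfold X, Y. transitivity (dot n3 n4 * dot n4 n1 - dot n3 n1 * dot n4 n4); [vec_coords; ring|].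
    rewrite E34, E41, U4, (dot_sym n3 n1), E13. ring. }
  assert (A3 : sC^2 = (dot v3 X)^2)
    by (rewrite <- HX; symmetry; apply perp_unit_dot_cross_sqr; auto).
  assert (A4 : sD^2 = (dot v4 Y)^2)
    by (rewrite <- HY; symmetry; apply perp_unit_dot_cross_sqr; auto).
  assert (B3 : sC^2 * dot n1 v3 = dot v3 X * det3 n1 n3 n4).
  { rewrite <- dot_scale_r, PX, dot_scale_r. reflexivity. }
  assert (B4 : sD^2 * dot n3 v4 = dot v4 Y * det3 n1 n3 n4).
  { rewrite <- dot_scale_r, PY, dot_scale_r, (det3_cycle n1 n3 n4). reflexivity. }
  assert (Sgn : 0 < dot v3 X * dot v4 Y).
  { assert (0 < (sC^2 * dot n1 v3) * (sD^2 * dot n3 v4)) 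
      by (apply Rmult_lt_0_compat; apply Rmult_lt_0_compat; auto; apply pow_lt; auto).
    rewrite B3, B4 in H. replace (dot v3 X * det3 n1 n3 n4 * (dot v4 Y * det3 n1 n3 n4))
      with ((dot v3 X * dot v4 Y) * (det3 n1 n3 n4)^2) in H by ring.
    pose proof (pow2_ge_0 (det3 n1 n3 n4)). nra. }
  assert (Prod : dot v3 X * dot v4 Y = sC * sD).
  { assert ((dot v3 X * dot v4 Y)^2 = (sC*sD)^2) by (rewrite Rpow_mult_distr, <- A3, <- A4; ring).
    rewrite <- (sqrt_pow2 (dot v3 X * dot v4 Y)), H by lra. apply sqrt_pow2. nra. }
  assert (E : sC^2 * sD^2 * dot v3 v4 = dot v3 X * dot v4 Y * dot X Y).
  { transitivity (dot (vscale (sC^2) v3) (vscale (sD^2) v4)); [vec_coords; ring|].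
    rewrite PX, PY. vec_coords. ring. }
  rewrite Prod, XY in E. apply (Rmult_eq_reg_l (sC^2*sD^2)); [|nra].
  rewrite E. field. lra.
Qed.

Lemma vertices_C3C4_C4C1_far c a b cc d v3 v4 : good c a b cc d ->
  cos (PI * cc + PI * d) < cos (PI * a + PI * b) -> is_vertex c I3 I4 v3 -> is_vertex c I4 I1 v4 ->
  2 * (cos (PI * a + PI * b) - cos (PI * cc + PI * d)) <= dot (vsub v3 v4) (vsub v3 v4).
Proof.
  intros Hg Hk V3 V4. rewrite !cos_plus in Hk.
  pose proof (good_admissible c a b cc d Hg) as Hadm.
  pose proof Hadm as [U1 U2 U3 U4 Ha Hb Hc Hd E12 E23 E34 E41 _ _ _].
  destruct (vertex_dots c I3 I4 I1 I2 v3 V3) as [S3 [P33 [P34 [Q31 Q32]]]]; try discriminate.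
  destruct (vertex_dots c I4 I1 I2 I3 v4 V4) as [S4 [P44 [P41 [Q42 Q43]]]]; try discriminate.
  destruct (sin_cos_PI_mul a Ha) as [sA0 HA]. destruct (sin_cos_PI_mul b Hb) as [sB0 HB].
  destruct (sin_cos_PI_mul cc Hc) as [sC0 HC]. destruct (sin_cos_PI_mul d Hd) as [sD0 HD].
  set (p := dot (c I1) (c I3)).
  assert (Hp : cos (PI*a) * cos (PI*b) - sin (PI*a) * sin (PI*b) < p).
  { destruct (admissible_gram_pos a b cc d _ _ _ _ Hadm) as [G _].
    rewrite (gram_factor _ _ _ _ _ HA HB) in G. fold p in G. apply root_between in G; [lra|nra]. }
  assert (V34 : dot v3 v4 = (cos (PI*cc) * cos (PI*d) - p) / (sin (PI*cc) * sin (PI*d))).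
  { apply (vertex34_dot_vertex41 (c I1) (c I3) (c I4)); auto. }
  replace (dot (vsub v3 v4) (vsub v3 v4)) with (dot v3 v3 - 2 * dot v3 v4 + dot v4 v4)
    by (vec_coords; ring).
  rewrite S3, S4, V34, !cos_plus.
  set (s := sin (PI*cc) * sin (PI*d)). set (q := p - (cos (PI*cc) * cos (PI*d) - s)).
  assert (Hs : 0 < s <= 1) by (unfold s; split; nra).
  replace (1 - 2 * ((cos (PI * cc) * cos (PI * d) - p) / s) + 1) with (2 * (q / s))
    by (unfold q; field; lra).
  assert (Hq0 : 0 < q) by (unfold q, s; lra).
  assert (Hq : q <= q / s).
  { apply (Rmult_le_reg_r s); [lra|]. replace (q / s * s) with q by (field; lra). nra. }
  unfold q in *. lra.
Qed.

Lemma adj_face4_wide c a b cc d : good c a b cc d ->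
  let k := cos (PI * a + PI * b) - cos (PI * cc + PI * d) in 0 < k ->
  exists x y, adj_face c I4 x /\ adj_face c I4 y /\ sqrt k <= norm (vsub x y).
Proof.
  intros Hg k Hk.
  pose proof (good_admissible c a b cc d Hg) as Hadm.
  pose proof Hg as [Hu [_ [_ [_ [v3 [v4 [_ [_ [V3 [V4 _]]]]]]]]]].
  destruct (vertex_dots c I3 I4 I1 I2 v3 V3) as [S3 [P33 [P34 [Q31 Q32]]]]; try discriminate.
  destruct (vertex_dots c I4 I1 I2 I3 v4 V4) as [S4 [P44 [P41 [Q42 Q43]]]]; try discriminate.
  assert (Far : sqrt (2 * k) <= norm (vsub v3 v4))
    by (apply sqrt_le_1_alt, (vertices_C3C4_C4C1_far c a b cc d); auto; unfold k in Hk; lra).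
  assert (Hsk : sqrt k < sqrt (2 * k)) by (apply sqrt_lt_1_alt; lra).
  destruct (exists_pos_le5 (dot (c I1) v3 / 4) (dot (c I2) v3 / 4) (dot (c I2) v4 / 4)
    (dot (c I3) v4 / 4) ((sqrt (2 * k) - sqrt k) / 4))
    as [eta [He [E1 [E2 [E3 [E4 E5]]]]]]; try lra.
  destruct (adj_face4_near_vertex c I3 v3 eta Hu) as [x [Hx Dx]]; try discriminate; auto.
  { apply (admissible_dot_sqr_lt1 c a b cc d Hadm); discriminate. }
  { intros j Hj3 Hj4. destruct j; try congruence; lra. }
  destruct (adj_face4_near_vertex c I1 v4 eta Hu) as [y [Hy Dy]]; try discriminate; auto.
  { apply (admissible_dot_sqr_lt1 c a b cc d Hadm); discriminate. }
  { intros j Hj1 Hj4. destruct j; try congruence; lra. }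
  exists x, y. split; [exact Hx|]. split; [exact Hy|].
  pose proof (norm_vsub_chain x y v3 v4). lra.
Qed.

Section Core.
Variables (c0 : config) (a b cc d : R).
Hypotheses (Hg : good c0 a b cc d) (Hab : cc + d < a + b).
Local Notation A := (cos (PI * a)).
Local Notation B := (cos (PI * b)).
Local Notation C := (cos (PI * cc)).
Local Notation D := (cos (PI * d)).
Local Notation sA := (sin (PI * a)).
Local Notation sB := (sin (PI * b)).
Local Notation p_end := (A*B - sA*sB).
Local Notation n1 := (c0 I1).
Local Notation n2 := (c0 I2).
Local Notation sg := (sign_of (det3 n1 n2 (c0 I3))).
Local Notation p0 := (dot n1 (c0 I3)).
Local Notation path := (diag_path n1 n2 A B C D sA sg p0 p_end).

Lemma core_facts : (0 < a < 1 /\ 0 < b < 1 /\ 0 < cc < 1 /\ 0 < d < 1) /\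
  frame_hyp n1 n2 A sA sg /\ diag_ok a b cc d p0 /\ endpoint_ineqs a b cc d /\ p_end < p0.
Proof.
  pose proof (good_admissible c0 a b cc d Hg) as Hadm.
  pose proof Hadm as [_ _ _ _ Ha Hb Hc Hd _ _ _ _ _ _ _].
  pose proof (admissible_diag_ok _ _ _ _ _ _ _ _ Hadm) as Hok.
  pose proof (admissible_endpoint_ineqs _ _ _ _ _ _ _ _ Hadm Hab) as Hend.
  split; [tauto|]. split; [apply (admissible_frame_hyp _ _ _ _ _ _ _ _ Hadm)|].
  split; [exact Hok|]. split; [exact Hend|].
  apply (p_end_lt a b cc d); auto.
Qed.

Lemma lerp_between t : closed01 t -> p_end <= lerp p0 p_end t <= p0.
Proof.
  intros [H0 H1]. destruct core_facts as [_ [_ [_ [_ Hlt]]]]. unfold lerp. split; nra.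
Qed.

Lemma diag_path_start : path 0 = c0.
Proof.
  pose proof (good_admissible c0 a b cc d Hg) as Hadm.
  pose proof (admissible_n3_on_diag _ _ _ _ _ _ _ _ Hadm) as E3.
  pose proof (admissible_n4_on_diag _ _ _ _ _ _ _ _ Hadm) as E4.
  unfold diag_path. replace (lerp p0 p_end 0) with p0 by (unfold lerp; ring).
  apply functional_extensionality. intros []; simpl; auto.
Qed.

Lemma diag_path_good t : halfopen01 t -> good (path t) a b cc d.
Proof.
  intros Ht. destruct core_facts as [[Ha [Hb [Hc Hd]]] [Hf [Hok [Hend Hlt]]]].
  apply admissible_good, diag_admissible; auto.
  apply (diag_ok_between a b cc d Ha Hb Hc Hd p0); auto.
  destruct Ht. unfold lerp. split; nra.
Qed.

Lemma diag_path_triple_point : triple_point (path 1) I1 I2 I3.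
Proof.
  destruct core_facts as [[Ha [Hb _]] [Hf _]].
  destruct (sin_cos_PI_mul a Ha) as [sA0 HA]. destruct (sin_cos_PI_mul b Hb) as [sB0 HB].
  destruct (frame_orthonormal n1 n2 A sA sg Hf) as [_ [_ [O3 [_ [O13 _]]]]].
  unfold diag_path. replace (lerp p0 p_end 1) with p_end by (unfold lerp; ring).
  exists (frame_e3 n1 n2 A sA sg). unfold great_circle, on_sphere. simpl.
  destruct (frame_coords n1 n2 A sA sg Hf p_end (beta3 A B sA p_end) (gamma3 A B sA p_end))
    as [_ [_ C3]].
  assert (Gz : gamma3 A B sA p_end = 0).
  { unfold gamma3. rewrite (gram_factor A B sA sB p_end HA HB), Rminus_diag, Rmult_0_l, sqrt_0.
    unfold Rdiv. ring. }
  repeat split; auto.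
  - rewrite (dot_frame_e3 n1 n2 A sA sg Hf).
    replace (det3 n1 n2 n2) with 0 by (vec_coords; ring). unfold Rdiv. ring.
  - unfold diag_n3. rewrite C3. exact Gz.
Qed.

Lemma can_contract_T2 : can_contract c0 a b cc d I2 I1 I3.
Proof.
  destruct core_facts as [[Ha [Hb [Hc Hd]]] [Hf [Hok [Hend Hlt]]]].
  destruct (sin_cos_PI_mul b Hb) as [sB0 HB]. destruct (sin_cos_PI_mul d Hd) as [_ HD].
  pose proof (diag_closed_interval a b cc d Ha Hb Hc Hd p0 Hok Hend) as Hint.
  exists path. split; [apply diag_path_start|]. split; [|split; [|split]].
  - apply diag_path_cont; auto. intros t Ht. destruct (Hint _ (lerp_between t Ht)) as [G1 [G2 K]].
    repeat split; lra.
  - apply diag_path_good.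
  - apply (diag_path_contracts _ _ _ _ _ _ _ sB); auto; try nra.
    + apply Hend.
    + destruct (Hint p_end) as [_ [G _]]; [lra | exact G].
    + intros p Hp. destruct (Hint p Hp) as [G1 [G2 K]]. repeat split; lra.
  - apply diag_path_triple_point.
Qed.
End Core.

Lemma not_can_contract_weak_T4 c0 a b cc d : good c0 a b cc d -> cc + d < a + b ->
  ~ can_contract_weak c0 a b cc d I4.
Proof.
  intros Hg Hab [P [_ [_ [HgP Hct]]]].
  pose proof (good_admissible c0 a b cc d Hg) as Hadm.
  set (k := cos (PI * a + PI * b) - cos (PI * cc + PI * d)).
  assert (Hk : 0 < k).
  { destruct (admissible_endpoint_ineqs _ _ _ _ _ _ _ _ Hadm Hab) as [_ [K _]].
    unfold k. rewrite !cos_plus. lra. }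
  destruct (Hct (sqrt k) (sqrt_lt_R0 _ Hk)) as [del [Hdel Hcl]].
  set (t := Rmax 0 (1 - del/2)).
  assert (Ht : halfopen01 t)
    by (unfold t, halfopen01; split; [apply Rmax_l | apply Rmax_lub_lt; lra]).
  assert (Ht' : 1 - del < t < 1).
  { unfold t. split; [eapply Rlt_le_trans; [|apply Rmax_r]; lra | apply Rmax_lub_lt; lra]. }
  destruct (adj_face4_wide (P t) a b cc d (HgP t Ht) Hk) as [x [y [Hx [Hy Hxy]]]].
  pose proof (Hcl t Ht' x y Hx Hy). fold k in Hxy. lra.
Qed.

Section Relabel.
Variables s s' : idx -> idx.
Hypotheses (Hss' : forall i, s (s' i) = i) (Hs's : forall i, s' (s i) = i).

Lemma adj_face_relabel c i x : adj_face (fun j => c (s j)) i x <-> adj_face c (s i) x.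
Proof.
  split; intros [Sx [Ni Pk]]; split; auto; split; auto.
  - intros k Hk. specialize (Pk (s' k)). rewrite Hss' in Pk. apply Pk.
    intro E. apply Hk. rewrite <- E, Hss'. reflexivity.
  - intros k Hk. apply Pk. intro E. apply Hk. rewrite <- (Hs's k), E, Hs's. reflexivity.
Qed.

Lemma can_contract_relabel c a b cc d a' b' c' d' i j k :
  (forall c, good c a' b' c' d' -> good (fun i => c (s' i)) a b cc d) ->
  can_contract (fun i => c (s i)) a' b' c' d' i j k -> can_contract c a b cc d (s i) (s j) (s k).
Proof.
  intros Hgood [P [H0 [Hc [Hg [Hct [x Hx]]]]]].
  exists (fun t i => P t (s' i)). split; [|split; [|split; [|split]]].
  - apply functional_extensionality. intro m. rewrite H0, Hss'. reflexivity.
  - intros m t Ht eps He. apply Hc; auto.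
  - intros t Ht. apply Hgood, Hg, Ht.
  - intros eps He. destruct (Hct eps He) as [del [Hd Hcl]]. exists del. split; auto.
    intros t Ht x' y' Hx' Hy'.
    assert (E : (fun m => P t (s' (s m))) = P t)
      by (apply functional_extensionality; intro m; rewrite Hs's; reflexivity).
    apply (Hcl t Ht); rewrite <- E; apply (adj_face_relabel (fun m => P t (s' m))); assumption.
  - exists x. unfold great_circle in *. rewrite !Hs's. exact Hx.
Qed.

Lemma not_can_contract_weak_relabel c a b cc d a' b' c' d' i :
  (forall c, good c a b cc d -> good (fun i => c (s i)) a' b' c' d') ->
  ~ can_contract_weak (fun i => c (s i)) a' b' c' d' i -> ~ can_contract_weak c a b cc d (s i).
Proof.
  intros Hgood Hn [P [H0 [Hc [Hg Hct]]]]. apply Hn.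
  exists (fun t i => P t (s i)). split; [|split; [|split]].
  - rewrite H0. reflexivity.
  - intros m t Ht eps He. apply Hc; auto.
  - intros t Ht. apply Hgood, Hg, Ht.
  - intros eps He. destruct (Hct eps He) as [del [Hd Hcl]]. exists del. split; auto.
    intros t Ht x y Hx Hy. apply (Hcl t Ht); apply adj_face_relabel; assumption.
Qed.

Lemma contract_cases_relabel c0 a b cc d a' b' c' d' :
  (forall c, good c a b cc d -> good (fun i => c (s i)) a' b' c' d') ->
  (forall c, good c a' b' c' d' -> good (fun i => c (s' i)) a b cc d) ->
  good c0 a b cc d -> c' + d' < a' + b' ->
  can_contract c0 a b cc d (s I2) (s I1) (s I3) /\ ~ can_contract_weak c0 a b cc d (s I4).
Proof.
  intros Hto Hfrom Hg Hlt. split.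
  - apply can_contract_relabel with a' b' c' d'; auto. apply can_contract_T2; auto.
  - apply not_can_contract_weak_relabel with a' b' c' d'; auto.
    apply not_can_contract_weak_T4; auto.
Qed.
End Relabel.

Lemma good_rotate2 c a b cc d : good c a b cc d -> good (fun i => c (rot (rot i))) cc d a b.
Proof. intros H. do 2 apply good_rotate in H. exact H. Qed.

Lemma good_rotate3 c a b cc d : good c a b cc d -> good (fun i => c (rot (rot (rot i)))) d a b cc.
Proof. intros H. do 3 apply good_rotate in H. exact H. Qed.

Theorem proposition5p3 (c0 : config) (a b c d : R) :
  good c0 a b c d ->
  (a + b > c + d -> can_contract c0 a b c d I2 I1 I3 /\ ~ can_contract_weak c0 a b c d I4) /\
  (a + b < c + d -> can_contract c0 a b c d I4 I3 I1 /\ ~ can_contract_weak c0 a b c d I2) /\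
  (a + d > b + c -> can_contract c0 a b c d I1 I4 I2 /\ ~ can_contract_weak c0 a b c d I3) /\
  (a + d < b + c -> can_contract c0 a b c d I3 I2 I4 /\ ~ can_contract_weak c0 a b c d I1).
Proof.
  intros Hg. split; [|split; [|split]]; intro Hlt.
  - split; [apply can_contract_T2 | apply not_can_contract_weak_T4]; auto.
  - apply (contract_cases_relabel (fun i => rot (rot i)) (fun i => rot (rot i))
      (ltac:(intros []; reflexivity)) (ltac:(intros []; reflexivity)) c0 a b c d c d a b);
      auto using good_rotate2; lra.
  - apply (contract_cases_relabel (fun i => rot (rot (rot i))) rot
      (ltac:(intros []; reflexivity)) (ltac:(intros []; reflexivity)) c0 a b c d d a b c);
      auto using good_rotate, good_rotate3; lra.
  - apply (contract_cases_relabel rot (fun i => rot (rot (rot i)))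
      (ltac:(intros []; reflexivity)) (ltac:(intros []; reflexivity)) c0 a b c d b c d a);
      auto using good_rotate, good_rotate3; lra.
Qed.
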